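(* Let $\beta>\beta_c$ and $0<\delta<\beta$ with $\delta\le\bar\delta(\beta)$. Then the (unique) maximizer $\bar q_{\beta,\delta}$ of $q\mapsto T_\delta(1/\sqrt q)$ on $(0,\infty)$ satisfies $\bar q_{\beta,\delta}>q^*_\delta$.
   Context: $\Gamma_\beta=\frac{e^{-\beta}+e^{-3\beta/2}}{1-e^{-\beta/2}}$, $\beta_c$ the unique positive solution of $\Gamma_\beta=1$. $c_\beta=\frac{1+e^{-\beta/2}}{1-e^{-\beta/2}}$, $\mathcal L(h)=\log\sum_{k\in\mathbb Z}e^{hk}e^{-\beta|k|/2}/c_\beta$ for $|h|<\beta/2$. $\mathcal G(h)=\int_0^1\mathcal L(h(x-\frac12))dx$, $\tilde h(q)$ the unique $h\in[0,\beta)$ with $\mathcal G'(h)=q$; $\mathcal H_\delta(s)=\int_0^1\mathcal L(sx+\delta-\frac\beta2)dx$ for $s\in(-\delta,\beta-\delta)$, $s_\delta(q)$ the unique solution of $\mathcal H_\delta'(s)=q$; $\delta_0(q)=\frac\beta2-\frac{\tilde h(q)}2$; $\psi(q,\delta)=\mathcal G(\tilde h(q))-q\tilde h(q)$ if $0\le\delta\le\delta_0(q)$, $\mathcal H_\delta(s_\delta(q))-qs_\delta(q)$ if $\delta_0(q)<\delta<\beta$; $T_\delta(a)=a\log\Gamma_\beta+a\psi(1/a^2,\delta)$. $q^*_\delta=\inf\{q>0:\delta-\frac\beta2+s_\delta(q)\ge0\}$. $x_\beta$ is the unique solution in $(0,\beta/2)$ of $\mathcal L(x)=-\log\Gamma_\beta$,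 $\bar\delta(\beta)=\beta\wedge\inf\{\delta\in(0,\beta):\mathcal H'_\delta(\frac\beta2-\delta-x_\beta)>0\}$. *)

From Stdlib Require Import Reals Lra ClassicalEpsilon.
From Coquelicot Require Import Coquelicot.
Open Scope R_scope.

(* "the unique x with P x": chosen by Hilbert's epsilon (arbitrary if none) *)
Definition the_unique (P : R -> Prop) : R := epsilon (inhabits 0) P.

Definition Gamma (beta : R) : R :=
  (exp (- beta) + exp (- (3 * beta / 2))) / (1 - exp (- (beta / 2))).

Definition beta_c : R := the_unique (fun b => 0 < b /\ Gamma b = 1).

Definition c_beta (beta : R) : R :=
  (1 + exp (- (beta / 2))) / (1 - exp (- (beta / 2))).

(* sum_{k in Z} e^{hk} e^{-beta |k|/2}, with the terms k = n (n >= 0)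
   and k = -(n+1) grouped together *)
Definition Zsum (beta h : R) : R :=
  Series (fun n : nat =>
    exp (h * INR n) * exp (- (beta * Rabs (INR n) / 2))
    + exp (h * (- INR (S n))) * exp (- (beta * Rabs (- INR (S n)) / 2))).

Definition L (beta h : R) : R := ln (Zsum beta h / c_beta beta).

Definition G (beta h : R) : R := RInt (fun x => L beta (h * (x - 1/2))) 0 1.

Definition htilde (beta q : R) : R :=
  the_unique (fun h => 0 <= h < beta /\ is_derive (G beta) h q).

Definition H (beta delta s : R) : R :=
  RInt (fun x => L beta (s * x + delta - beta / 2)) 0 1.

Definition s_delta (beta delta q : R) : R :=
  the_unique (fun s => - delta < s < beta - delta /\ is_derive (H beta delta) s q).

Definition delta0 (beta q : R) : R := beta / 2 - htilde beta q / 2.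

Definition psi (beta q delta : R) : R :=
  if Rle_dec delta (delta0 beta q)
  then G beta (htilde beta q) - q * htilde beta q
  else H beta delta (s_delta beta delta q) - q * s_delta beta delta q.

Definition T (beta delta a : R) : R :=
  a * ln (Gamma beta) + a * psi beta (1 / a ^ 2) delta.

(* q*_delta = inf {q > 0 : delta - beta/2 + s_delta(q) >= 0} (in Rbar; +oo if empty) *)
Definition qstar (beta delta : R) : Rbar :=
  Glb_Rbar (fun q => 0 < q /\ delta - beta / 2 + s_delta beta delta q >= 0).

Definition x_beta (beta : R) : R :=
  the_unique (fun x => 0 < x < beta / 2 /\ L beta x = - ln (Gamma beta)).

Definition deltabar (beta : R) : Rbar :=
  Rbar_min (Finite beta)
    (Glb_Rbar (fun delta => 0 < delta < beta /\
       Derive (H beta delta) (beta / 2 - delta - x_beta beta) > 0)).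

Definition Tq (beta delta q : R) : R := T beta delta (1 / sqrt q).

Definition is_maximizer (beta delta q : R) : Prop :=
  0 < q /\ forall q', 0 < q' -> Tq beta delta q' <= Tq beta delta q.

From Stdlib Require Import Reals Lra Lia Ranalysis5 ClassicalEpsilon.
From Coquelicot Require Import Coquelicot.
Open Scope R_scope.

(* Write [u = e^(-beta/2)]. On the strip [|y| < beta/2], [L] has the closed form
   [Lc y = 2 ln (1 - u) - ln (1 - u e^y) - ln (1 - u e^(-y))], an even, strictly convex function.
   Hence [G] and [H] are averages of [Lc] over segments moving affinely with the slope [k]: they are
   strictly convex, and integration by parts gives [F k + k F'(k) = Lc e], where [e] is the far
   endpoint of the segment ([k/2] for [G], [k + delta - beta/2] for [H]).
   Writing [V r] and [k r] for the value and the point of slope [r] on the relevant branch,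
   [psi p = min_r (V r - p k r)] (tangent lines of [G] continue below [H] and conversely), so with
   [t = sqrt q] the increments of [t |-> T (1/t) = (ln Gamma + psi (t^2)) / t] have, up to a
   quadratic error, the sign of [Lc x_beta - Lc e] (recall [Lc x_beta = - ln Gamma]).
   This sign changes exactly at the slope [qbar] where [|e| = x_beta]; the hypothesis
   [delta <= deltabar] rules out [e < - x_beta] on the [H] branch. So [qbar] is the unique
   maximizer, and since [H'] at [beta/2 - delta] (where [e = 0]) lies below [qbar],
   [q*_delta < qbar]. *)

Lemma continuous_of_ex_derive (f : R -> R) x : ex_derive f x -> continuous f x.
Proof. exact (@ex_derive_continuous R_AbsRing R_NormedModule f x). Qed.

Lemma continuous_const_R (c x : R) : continuous (fun _ : R => c) x.
Proof. apply (@continuous_const R_UniformSpace R_UniformSpace). Qed.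

Lemma continuous_plus_R (f g : R -> R) x :
  continuous f x -> continuous g x -> continuous (fun y => f y + g y) x.
Proof. exact (@continuous_plus R_UniformSpace R_AbsRing R_NormedModule f g x). Qed.

Lemma continuous_mult_R (f g : R -> R) x :
  continuous f x -> continuous g x -> continuous (fun y => f y * g y) x.
Proof. exact (@continuous_mult R_UniformSpace R_AbsRing f g x). Qed.

Lemma continuous_scal_R (f : R -> R) t x : continuous f x -> continuous (fun y => t * f y) x.
Proof. intros; apply continuous_mult_R; [apply continuous_const_R | assumption]. Qed.

Lemma ex_RInt_continuous_R (f : R -> R) a c :
  (forall z, Rmin a c <= z <= Rmax a c -> continuous f z) -> ex_RInt f a c.
Proof. exact (@ex_RInt_continuous R_CompleteNormedModule f a c). Qed.

Lemma ex_RInt_scal_R (f : R -> R) a c t : ex_RInt f a c -> ex_RInt (fun x => t * f x) a c.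
Proof. exact (ex_RInt_scal f a c t). Qed.

Lemma ex_RInt_plus_R (f g : R -> R) a c :
  ex_RInt f a c -> ex_RInt g a c -> ex_RInt (fun x => f x + g x) a c.
Proof. exact (ex_RInt_plus f g a c). Qed.

Lemma RInt_scal_R (f : R -> R) a c t :
  ex_RInt f a c -> RInt (fun x => t * f x) a c = t * RInt f a c.
Proof. exact (RInt_scal f a c t). Qed.

Lemma RInt_plus_R (f g : R -> R) a c : ex_RInt f a c -> ex_RInt g a c ->
  RInt (fun x => f x + g x) a c = RInt f a c + RInt g a c.
Proof. exact (RInt_plus f g a c). Qed.

Lemma RInt_convex_comb (f g : R -> R) t a c : ex_RInt f a c -> ex_RInt g a c ->
  RInt (fun x => t * f x + (1 - t) * g x) a c = t * RInt f a c + (1 - t) * RInt g a c.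
Proof.
  intros hf hg.
  rewrite RInt_plus_R by (apply ex_RInt_scal_R; assumption).
  now rewrite !RInt_scal_R.
Qed.

Lemma RInt_const_R (c a b : R) : RInt (fun _ => c) a b = (b - a) * c.
Proof. rewrite RInt_const. reflexivity. Qed.

Lemma RInt_affine_01 (a0 a1 : R) : RInt (fun x => a0 + a1 * x) 0 1 = a0 + a1 / 2.
Proof.
  apply is_RInt_unique.
  replace (a0 + a1 / 2) with (minus (a0 * 1 + a1 * (1 * 1 / 2)) (a0 * 0 + a1 * (0 * 0 / 2)))
    by (unfold minus, plus, opp; simpl; field).
  apply (is_RInt_derive (fun x => a0 * x + a1 * (x * x / 2))).
  - intros x _. auto_derive; [exact I | field].
  - intros x _. apply continuous_plus_R; [apply continuous_const_R |].
    apply continuous_scal_R, continuous_id.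
Qed.

Lemma RInt_reflect_01 (f : R -> R) :
  ex_RInt f 0 1 -> RInt (fun x => f (1 - x)) 0 1 = RInt f 0 1.
Proof.
  intros h.
  assert (h' : ex_RInt f (-1 * 0 + 1) (-1 * 1 + 1)).
  { replace (-1 * 0 + 1) with 1 by ring. replace (-1 * 1 + 1) with 0 by ring.
    now apply ex_RInt_swap. }
  assert (E := RInt_comp_lin f (-1) 1 0 1 h').
  replace (-1 * 0 + 1) with 1 in E by ring. replace (-1 * 1 + 1) with 0 in E by ring.
  rewrite <- (opp_RInt_swap f 0 1 h) in E.
  rewrite (RInt_ext _ (fun y => -1 * f (1 - y))) in E.
  2: { intros x _. unfold scal; simpl; unfold mult; simpl. do 2 f_equal. ring. }
  rewrite RInt_scal_R in E.
  - unfold opp in E; simpl in E. lra.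
  - apply (ex_RInt_ext (fun y => -1 * scal (-1) (f (-1 * y + 1)))).
    + intros x _. unfold scal; simpl; unfold mult; simpl. rewrite <- Rmult_assoc.
      replace (-1 * x + 1) with (1 - x) by ring. ring.
    + apply ex_RInt_scal_R, (ex_RInt_comp_lin f (-1) 1 0 1 h').
Qed.

Definition convex_on (f : R -> R) (lo hi : R) :=
  forall y1 y2 t, lo < y1 < hi -> lo < y2 < hi -> 0 <= t <= 1 ->
  f (t * y1 + (1 - t) * y2) <= t * f y1 + (1 - t) * f y2.

Definition strictly_convex_on (f : R -> R) (lo hi : R) :=
  forall y1 y2 t, lo < y1 < hi -> lo < y2 < hi -> y1 <> y2 -> 0 < t < 1 ->
  f (t * y1 + (1 - t) * y2) < t * f y1 + (1 - t) * f y2.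

Lemma convex_comb_in lo hi a c t : lo < a < hi -> lo < c < hi -> 0 <= t <= 1 ->
  lo < t * a + (1 - t) * c < hi.
Proof.
  intros ha hc ht.
  assert (0 <= t * (a - lo) /\ 0 <= (1 - t) * (c - lo)) by (split; apply Rmult_le_pos; lra).
  assert (0 <= t * (hi - a) /\ 0 <= (1 - t) * (hi - c)) by (split; apply Rmult_le_pos; lra).
  destruct (Req_dec t 0) as [->|nz]; [lra|].
  assert (0 < t * (a - lo) /\ 0 < t * (hi - a)) by (split; apply Rmult_lt_0_compat; lra).
  lra.
Qed.

Lemma convex_of_strictly_convex f lo hi :
  strictly_convex_on f lo hi -> convex_on f lo hi.
Proof.
  intros hs y1 y2 t h1 h2 ht.
  destruct (Req_dec y1 y2) as [<-|ne].
  { replace (t * y1 + (1 - t) * y1) with y1 by ring. lra. }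
  destruct (Req_dec t 0) as [->|n0].
  { replace (0 * y1 + (1 - 0) * y2) with y2 by ring. lra. }
  destruct (Req_dec t 1) as [->|n1].
  { replace (1 * y1 + (1 - 1) * y2) with y1 by ring. lra. }
  left. apply hs; auto; lra.
Qed.

Lemma strictly_convex_of_derive_increasing (f f' : R -> R) lo hi :
  (forall y, lo < y < hi -> is_derive f y (f' y)) ->
  (forall y1 y2, lo < y1 -> y1 < y2 -> y2 < hi -> f' y1 < f' y2) ->
  strictly_convex_on f lo hi.
Proof.
  intros hd hm.
  assert (K : forall y1 y2 t, lo < y1 < hi -> lo < y2 < hi -> y1 < y2 -> 0 < t < 1 ->
     f (t * y1 + (1 - t) * y2) < t * f y1 + (1 - t) * f y2).
  { intros y1 y2 t h1 h2 h12 ht.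
    set (z := t * y1 + (1 - t) * y2).
    assert (hz1 : y1 < z) by (unfold z; nra).
    assert (hz2 : z < y2) by (unfold z; nra).
    destruct (MVT_cor2 f f' y1 z hz1) as [c1 [E1 H1]].
    { intros c hc. apply is_derive_Reals, hd. lra. }
    destruct (MVT_cor2 f f' z y2 hz2) as [c2 [E2 H2]].
    { intros c hc. apply is_derive_Reals, hd. lra. }
    assert (hc : f' c1 < f' c2) by (apply hm; lra).
    replace (z - y1) with ((1 - t) * (y2 - y1)) in E1 by (unfold z; ring).
    replace (y2 - z) with (t * (y2 - y1)) in E2 by (unfold z; ring).
    assert (0 < t * (1 - t) * (y2 - y1)) by (apply Rmult_lt_0_compat; nra).
    nra. }
  intros y1 y2 t h1 h2 hne ht.
  destruct (Rlt_or_le y1 y2) as [h|h]; [now apply K|].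
  replace (t * y1 + (1 - t) * y2) with ((1 - t) * y2 + (1 - (1 - t)) * y1) by ring.
  replace (t * f y1 + (1 - t) * f y2) with ((1 - t) * f y2 + (1 - (1 - t)) * f y1) by ring.
  apply K; auto; lra.
Qed.

Lemma convex_secant_le f lo hi x0 y t : convex_on f lo hi -> lo < x0 < hi -> lo < y < hi ->
  0 <= t <= 1 -> f (x0 + t * (y - x0)) - f x0 <= t * (f y - f x0).
Proof.
  intros hc hx hy ht.
  replace (x0 + t * (y - x0)) with (t * y + (1 - t) * x0) by ring.
  specialize (hc y x0 t hy hx ht). lra.
Qed.

(* The difference quotients at [x0] towards [y] are bounded by the secant slope; pass to the
   limit. *)
Lemma convex_tangent_le f lo hi x0 d y : convex_on f lo hi -> lo < x0 < hi -> lo < y < hi ->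
  is_derive f x0 d -> f x0 + d * (y - x0) <= f y.
Proof.
  intros hc hx hy hd. apply is_derive_Reals in hd.
  destruct (Req_dec y x0) as [->|ne]; [lra|].
  destruct (Rle_lt_dec (f x0 + d * (y - x0)) (f y)) as [ok|bad]; [exact ok|exfalso].
  set (gap := f x0 + d * (y - x0) - f y).
  assert (hay : 0 < Rabs (y - x0)) by (apply Rabs_pos_lt; lra).
  set (eps := gap / (2 * Rabs (y - x0))).
  assert (heps : 0 < eps) by (unfold eps, gap; apply Rdiv_lt_0_compat; lra).
  destruct (hd eps heps) as [del hdel].
  set (t := Rmin (1/2) (del / (2 * Rabs (y - x0)))).
  assert (ht0 : 0 < t).
  { apply Rmin_glb_lt; [lra|]. apply Rdiv_lt_0_compat; [apply cond_pos | lra]. }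
  assert (ht1 : t <= 1/2) by apply Rmin_l.
  assert (htd : t * Rabs (y - x0) < del).
  { assert (t <= del / (2 * Rabs (y - x0))) by apply Rmin_r.
    apply Rle_lt_trans with (del / (2 * Rabs (y - x0)) * Rabs (y - x0)).
    - now apply Rmult_le_compat_r; [apply Rabs_pos|].
    - replace (del / (2 * Rabs (y - x0)) * Rabs (y - x0)) with (del / 2) by (field; lra).
      generalize (cond_pos del). lra. }
  set (h := t * (y - x0)).
  assert (hh0 : h <> 0) by (unfold h; apply Rmult_integral_contrapositive; lra).
  assert (hh1 : Rabs h < del) by (unfold h; rewrite Rabs_mult, Rabs_pos_eq by lra; exact htd).
  specialize (hdel h hh0 hh1). apply Rabs_def2 in hdel.
  set (Q := (f (x0 + h) - f x0) / h) in *.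
  assert (secant : Q * (y - x0) <= f y - f x0).
  { apply (Rmult_le_reg_l t); [exact ht0|].
    replace (t * (Q * (y - x0))) with (f (x0 + h) - f x0) by (unfold Q, h; field; split; lra).
    apply convex_secant_le with lo hi; auto; lra. }
  assert ((Q - d) * (y - x0) >= - (eps * Rabs (y - x0))).
  { destruct (Rle_lt_dec 0 (y - x0)).
    - rewrite Rabs_pos_eq by lra. nra.
    - rewrite Rabs_left by lra. nra. }
  assert (eps * Rabs (y - x0) = gap / 2) by (unfold eps; field; lra).
  unfold gap in *. lra.
Qed.

Section StrictlyConvexDerive.
Variables (f : R -> R) (lo hi : R).
Hypothesis f_convex : strictly_convex_on f lo hi.

Lemma strictly_convex_derive_lt x1 x2 d1 d2 : lo < x1 < hi -> lo < x2 < hi -> x1 < x2 ->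
  is_derive f x1 d1 -> is_derive f x2 d2 -> d1 < d2.
Proof.
  intros h1 h2 h12 hd1 hd2.
  assert (hc := convex_of_strictly_convex _ _ _ f_convex).
  set (mid := (1/2) * x1 + (1 - 1/2) * x2).
  assert (hm : lo < mid < hi) by (unfold mid; lra).
  assert (A := convex_tangent_le f lo hi x1 d1 mid hc h1 hm hd1).
  assert (B := convex_tangent_le f lo hi x2 d2 x1 hc h2 h1 hd2).
  assert (C := f_convex x1 x2 (1/2) h1 h2 ltac:(lra) ltac:(lra)). fold mid in C.
  replace (d1 * (mid - x1)) with (d1 * (x2 - x1) / 2) in A by (unfold mid; field).
  replace (d2 * (x1 - x2)) with (- (d2 * (x2 - x1))) in B by ring.
  assert (d1 * (x2 - x1) < d2 * (x2 - x1)) by lra.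
  apply Rmult_lt_reg_r with (x2 - x1); lra.
Qed.

Hypothesis f_derivable : forall y, lo < y < hi -> ex_derive f y.

Lemma strictly_convex_Derive_lt_iff x1 x2 : lo < x1 < hi -> lo < x2 < hi ->
  (Derive f x1 < Derive f x2 <-> x1 < x2).
Proof.
  intros h1 h2.
  assert (D : forall y, lo < y < hi -> is_derive f y (Derive f y))
    by (intros; now apply Derive_correct, f_derivable).
  split; intros lt.
  - destruct (Rlt_le_dec x1 x2) as [ok|[lt'|<-]]; [exact ok | | lra].
    assert (Derive f x2 < Derive f x1) by (apply strictly_convex_derive_lt with x2 x1; auto). lra.
  - apply strictly_convex_derive_lt with x1 x2; auto.
Qed.

Lemma strictly_convex_Derive_le_iff x1 x2 : lo < x1 < hi -> lo < x2 < hi ->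
  (Derive f x1 <= Derive f x2 <-> x1 <= x2).
Proof.
  intros h1 h2. split; intros le; apply Rnot_lt_le; intros lt;
    apply (strictly_convex_Derive_lt_iff x2 x1 h2 h1) in lt; lra.
Qed.

End StrictlyConvexDerive.

Lemma is_derive_interior_min_0 (f : R -> R) lo hi x d : lo < x < hi ->
  (forall y, lo < y < hi -> f x <= f y) -> is_derive f x d -> d = 0.
Proof.
  intros hx hm hd. apply is_derive_Reals in hd.
  exact (deriv_minimum f lo hi x (exist _ d hd) (proj1 hx) (proj2 hx)
           (fun y a b => hm y (conj a b))).
Qed.

Lemma derive_neg_not_left_min (g : R -> R) a c d : a < c -> is_derive g a d -> d < 0 ->
  exists y, a < y <= c /\ g y < g a.
Proof.
  intros hac hd hneg. apply is_derive_Reals in hd.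
  destruct (hd (- d / 2) ltac:(lra)) as [del hdel].
  set (h := Rmin (del / 2) (c - a)).
  assert (h0 : 0 < h) by (apply Rmin_glb_lt; [generalize (cond_pos del) |]; lra).
  assert (h1 : h < del) by (assert (h <= del / 2) by apply Rmin_l; generalize (cond_pos del); lra).
  assert (h2 : h <= c - a) by apply Rmin_r.
  specialize (hdel h ltac:(lra) ltac:(rewrite Rabs_pos_eq; lra)). apply Rabs_def2 in hdel.
  exists (a + h). split; [lra|].
  assert (hq : (g (a + h) - g a) / h < 0) by lra.
  assert (g (a + h) - g a = (g (a + h) - g a) / h * h) by (field; lra).
  assert ((g (a + h) - g a) / h * h < 0) by (apply Rmult_neg_pos; assumption).
  lra.
Qed.

Lemma derive_pos_not_right_min (g : R -> R) a c d : a < c -> is_derive g c d -> 0 < d ->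
  exists y, a <= y < c /\ g y < g c.
Proof.
  intros hac hd hpos.
  assert (hd' : is_derive (fun x => g (- x)) (- c) (- d)).
  { replace (- d) with (-1 * d) by ring.
    refine (is_derive_comp g Ropp (- c) d (-1) _ _).
    - rewrite Ropp_involutive. exact hd.
    - auto_derive; [exact I | ring]. }
  destruct (derive_neg_not_left_min _ (- c) (- a) (- d) ltac:(lra) hd' ltac:(lra))
    as [y [hy gy]].
  exists (- y). rewrite Ropp_involutive in gy. split; [lra | exact gy].
Qed.

(* Darboux: the minimum of [f x - q x] on [[a, c]] is interior, so the derivative there is [q]. *)
Lemma derive_intermediate_value (f : R -> R) a c q : a < c ->
  (forall x, a <= x <= c -> ex_derive f x) ->
  Derive f a < q -> q < Derive f c -> exists x, a < x < c /\ is_derive f x q.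
Proof.
  intros hac hd ha hc.
  set (g := fun x => f x - q * x).
  assert (hg : forall x, a <= x <= c -> is_derive g x (Derive f x - q)).
  { intros x hx. apply (is_derive_minus f (fun x => q * x)).
    - now apply Derive_correct, hd.
    - auto_derive; [exact I | ring]. }
  destruct (continuity_ab_min g a c) as [mx [hmin hmx]]; [lra| |].
  { intros x hx. apply continuity_pt_filterlim, continuous_of_ex_derive.
    eexists; now apply hg. }
  assert (na : mx <> a).
  { intros ->. destruct (derive_neg_not_left_min g a c (Derive f a - q) hac) as [y [hy gy]].
    - apply hg; lra.
    - lra.
    - specialize (hmin y ltac:(lra)). lra. }
  assert (nc : mx <> c).
  { intros ->. destruct (derive_pos_not_right_min g a c (Derive f c - q) hac) as [y [hy gy]].
    - apply hg; lra.
    - lra.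
    - specialize (hmin y ltac:(lra)). lra. }
  exists mx. split; [lra|].
  assert (Z := is_derive_interior_min_0 g a c mx _ ltac:(lra)
                 (fun y hy => hmin y ltac:(lra)) (hg mx ltac:(lra))).
  replace q with (Derive f mx) by lra. apply Derive_correct, hd; lra.
Qed.

(* Chop [[lo, hi]] into [n] pieces: the accumulated increments are at most [C (hi - lo)^2 / n]. *)
Lemma le_of_quadratic_increments (g : R -> R) C lo hi : 0 <= C -> lo < hi ->
  (forall a c, lo <= a -> a < c -> c <= hi -> g a - g c <= C * (c - a) * (c - a)) ->
  g lo <= g hi.
Proof.
  intros hC hlh hs.
  destruct (Rle_lt_dec (g lo) (g hi)) as [ok|bad]; [exact ok|exfalso].
  set (K := C * (hi - lo) * (hi - lo)).
  assert (hK : 0 <= K) by (unfold K; apply Rmult_le_pos; [apply Rmult_le_pos|]; lra).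
  destruct (INR_archimed (g lo - g hi) (K + 1) ltac:(lra)) as [n hn].
  assert (hnR : 0 < INR n).
  { destruct n; [simpl in hn; lra|]. apply lt_0_INR. lia. }
  set (h := (hi - lo) / INR n).
  assert (hh : 0 < h) by (unfold h; apply Rdiv_lt_0_compat; lra).
  assert (hnh : INR n * h = hi - lo) by (unfold h; field; lra).
  assert (acc : forall k, (k <= n)%nat -> g lo - g (lo + INR k * h) <= INR k * (C * h * h)).
  { induction k as [|k IH]; intros hk.
    - simpl. replace (lo + 0 * h) with lo by ring. lra.
    - specialize (IH ltac:(lia)).
      assert (hkn : INR (S k) <= INR n) by (apply le_INR; exact hk).
      assert (0 <= INR k) by apply pos_INR.
      assert (g (lo + INR k * h) - g (lo + INR (S k) * h) <= C * h * h).
      { replace (C * h * h) with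
          (C * (lo + INR (S k) * h - (lo + INR k * h)) * (lo + INR (S k) * h - (lo + INR k * h)))
          by (rewrite S_INR; ring).
        apply hs; rewrite ?S_INR in *; nra. }
      rewrite S_INR in *. lra. }
  specialize (acc n (le_n n)).
  replace (lo + INR n * h) with hi in acc by lra.
  replace (INR n * (C * h * h)) with (K / INR n) in acc by (unfold K, h; field; lra).
  assert (K / INR n < g lo - g hi).
  { apply (Rmult_lt_reg_r (INR n)); [exact hnR|].
    replace (K / INR n * INR n) with K by (field; lra). lra. }
  lra.
Qed.

Lemma ge_of_quadratic_increments (g : R -> R) C lo hi : 0 <= C -> lo < hi ->
  (forall a c, lo <= a -> a < c -> c <= hi -> g c - g a <= C * (c - a) * (c - a)) ->
  g hi <= g lo.
Proof.
  intros hC hlh hs.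
  assert (X := le_of_quadratic_increments (fun t => g (- t)) C (- hi) (- lo) hC ltac:(lra)).
  simpl in X. rewrite !Ropp_involutive in X. apply X.
  intros a c ha hac hc.
  replace (C * (c - a) * (c - a)) with (C * (- a - - c) * (- a - - c)) by ring.
  apply hs; lra.
Qed.

(** * Closed form of [L] *)

Definition u_beta (b : R) := exp (- (b / 2)).

Definition Lc (b y : R) :=
  2 * ln (1 - u_beta b) - ln (1 - u_beta b * exp y) - ln (1 - u_beta b * exp (- y)).

Definition Lc' (b y : R) :=
  u_beta b * exp y / (1 - u_beta b * exp y) - u_beta b * exp (- y) / (1 - u_beta b * exp (- y)).

Lemma u_beta_pos b : 0 < u_beta b.
Proof. apply exp_pos. Qed.

Lemma u_beta_exp_lt_1 b y : y < b / 2 -> u_beta b * exp y < 1.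
Proof. intros; unfold u_beta; rewrite <- exp_plus, <- exp_0; apply exp_increasing; lra. Qed.

Lemma u_beta_lt_1 b : 0 < b -> u_beta b < 1.
Proof. intros; rewrite <- (Rmult_1_r (u_beta b)), <- exp_0 at 1; apply u_beta_exp_lt_1; lra. Qed.

Lemma exp_mult_INR x n : exp (x * INR n) = exp x ^ n.
Proof.
  induction n as [|n IH]; [simpl; now rewrite Rmult_0_r, exp_0|].
  rewrite S_INR, Rmult_plus_distr_l, exp_plus, IH, Rmult_1_r. simpl. ring.
Qed.

(* The two halves of the sum over [Z] are geometric series of ratios [e^(y - b/2)] and
   [e^(-y - b/2)]. *)
Lemma L_Lc b y : 0 < b -> - (b / 2) < y < b / 2 -> L b y = Lc b y.
Proof.
  intros hb hy. unfold L, Zsum.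
  set (a := exp (y - b / 2)). set (c := exp (- y - b / 2)).
  assert (ha : 0 < a < 1).
  { split; [apply exp_pos | unfold a; rewrite <- exp_0; apply exp_increasing; lra]. }
  assert (hc : 0 < c < 1).
  { split; [apply exp_pos | unfold c; rewrite <- exp_0; apply exp_increasing; lra]. }
  assert (HS : is_series (fun n : nat =>
    exp (y * INR n) * exp (- (b * Rabs (INR n) / 2))
    + exp (y * (- INR (S n))) * exp (- (b * Rabs (- INR (S n)) / 2)))
    (/ (1 - a) + c * / (1 - c))).
  { apply (is_series_ext (fun n => plus (a ^ n) (scal c (c ^ n)))).
    - intros n. rewrite S_INR. unfold plus, scal; simpl. unfold mult; simpl.
      rewrite Rabs_Ropp, !Rabs_pos_eq by (generalize (pos_INR n); lra).
      unfold a, c. rewrite <- !exp_mult_INR, <- !exp_plus.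
      apply f_equal2; apply f_equal; field.
    - apply (@is_series_plus _ R_NormedModule);
        [| apply (@is_series_scal _ R_NormedModule)];
        apply is_series_geom; rewrite Rabs_pos_eq; lra. }
  rewrite (is_series_unique _ _ HS).
  assert (hu0 := u_beta_pos b). assert (hu1 := u_beta_lt_1 b hb).
  assert (Ea : u_beta b * exp y = a) by (unfold u_beta, a; rewrite <- exp_plus; f_equal; ring).
  assert (Ec : u_beta b * exp (- y) = c) by (unfold u_beta, c; rewrite <- exp_plus; f_equal; ring).
  assert (Eac : a * c = u_beta b * u_beta b)
    by (unfold a, c, u_beta; rewrite <- !exp_plus; f_equal; ring).
  unfold Lc, c_beta. fold (u_beta b). rewrite Ea, Ec.
  replace ((/ (1 - a) + c * / (1 - c)) / ((1 + u_beta b) / (1 - u_beta b)))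
    with ((1 - u_beta b) * (1 - u_beta b) / ((1 - a) * (1 - c))).
  2: { field_simplify_eq; [rewrite Rmult_assoc, Eac; ring | repeat split; lra]. }
  rewrite ln_div, !ln_mult by (try apply Rmult_lt_0_compat; lra). ring.
Qed.

Section Lc_facts.
Variable b : R.

Lemma one_minus_u_exp_pos y : y < b / 2 -> 0 < 1 - u_beta b * exp y.
Proof. intros; generalize (u_beta_exp_lt_1 b y); lra. Qed.

Lemma is_derive_Lc y : - (b / 2) < y < b / 2 -> is_derive (Lc b) y (Lc' b y).
Proof.
  intros hy. assert (h1 := one_minus_u_exp_pos y ltac:(lra)).
  assert (h2 := one_minus_u_exp_pos (- y) ltac:(lra)).
  unfold Lc, Lc'. auto_derive; [repeat split; lra | field; lra].
Qed.

Lemma ex_derive_Lc' y : - (b / 2) < y < b / 2 -> ex_derive (Lc' b) y.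
Proof.
  intros hy. assert (h1 := one_minus_u_exp_pos y ltac:(lra)).
  assert (h2 := one_minus_u_exp_pos (- y) ltac:(lra)).
  unfold Lc'. auto_derive. repeat split; lra.
Qed.

Lemma Lc_even y : Lc b (- y) = Lc b y.
Proof. unfold Lc. rewrite Ropp_involutive. ring. Qed.

Lemma Lc_0 : Lc b 0 = 0.
Proof. unfold Lc. rewrite Ropp_0, exp_0, Rmult_1_r. ring. Qed.

Lemma Lc'_0 : Lc' b 0 = 0.
Proof. unfold Lc'. rewrite Ropp_0. ring. Qed.

Lemma Lc'_increasing y1 y2 : - (b / 2) < y1 -> y1 < y2 -> y2 < b / 2 -> Lc' b y1 < Lc' b y2.
Proof.
  intros h1 h12 h2. unfold Lc'.
  assert (hu := u_beta_pos b).
  assert (ratio_incr : forall z1 z2, 0 < z1 < z2 -> u_beta b * z2 < 1 ->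
    u_beta b * z1 / (1 - u_beta b * z1) < u_beta b * z2 / (1 - u_beta b * z2)).
  { intros z1 z2 hz hz2. assert (u_beta b * z1 < u_beta b * z2) by (apply Rmult_lt_compat_l; lra).
    apply (Rmult_lt_reg_r ((1 - u_beta b * z1) * (1 - u_beta b * z2)));
      [apply Rmult_lt_0_compat; lra | field_simplify; nra]. }
  assert (exp y1 < exp y2 /\ exp (- y2) < exp (- y1)) by (split; apply exp_increasing; lra).
  assert (0 < exp y1 /\ 0 < exp (- y2)) by (split; apply exp_pos).
  assert (u_beta b * exp y2 < 1 /\ u_beta b * exp (- y1) < 1)
    by (split; apply u_beta_exp_lt_1; lra).
  assert (A := ratio_incr (exp y1) (exp y2) ltac:(lra) ltac:(lra)).
  assert (B := ratio_incr (exp (- y2)) (exp (- y1)) ltac:(lra) ltac:(lra)).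
  lra.
Qed.

Lemma Lc_strictly_convex : strictly_convex_on (Lc b) (- (b / 2)) (b / 2).
Proof.
  apply strictly_convex_of_derive_increasing with (Lc' b).
  - exact is_derive_Lc.
  - exact Lc'_increasing.
Qed.

Lemma Lc_convex : convex_on (Lc b) (- (b / 2)) (b / 2).
Proof. apply convex_of_strictly_convex, Lc_strictly_convex. Qed.

Lemma Lc_increasing y1 y2 : 0 <= y1 -> y1 < y2 -> y2 < b / 2 -> Lc b y1 < Lc b y2.
Proof.
  intros h1 h12 h2.
  destruct (MVT_cor2 (Lc b) (Lc' b) y1 y2 h12) as [c [E hc]].
  { intros c hc. apply is_derive_Reals, is_derive_Lc. lra. }
  assert (0 < Lc' b c) by (rewrite <- Lc'_0; apply Lc'_increasing; lra).
  nra.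
Qed.

Lemma Lc_Rabs y : Lc b (Rabs y) = Lc b y.
Proof.
  destruct (Rle_lt_dec 0 y); [now rewrite Rabs_pos_eq | now rewrite Rabs_left, Lc_even].
Qed.

Lemma Lc_lt_Rabs y z : Rabs y < z -> z < b / 2 -> Lc b y < Lc b z.
Proof. intros. rewrite <- Lc_Rabs. apply Lc_increasing; [apply Rabs_pos | |]; assumption. Qed.

Lemma Lc_le_Rabs y z : Rabs y <= z -> z < b / 2 -> Lc b y <= Lc b z.
Proof.
  intros h hz. destruct h as [lt|<-]; [left; now apply Lc_lt_Rabs | right; symmetry; apply Lc_Rabs].
Qed.

Lemma Lc_ge_0 y : - (b / 2) < y < b / 2 -> 0 <= Lc b y.
Proof.
  intros hy. rewrite <- Lc_0, <- (Lc_Rabs y).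
  apply Lc_le_Rabs; [rewrite Rabs_R0; apply Rabs_pos | apply Rabs_def1; lra].
Qed.

(* Near [b/2] the term [- ln (1 - u e^y)] blows up. *)
Lemma Lc_unbounded M : 0 < b -> exists y, 0 < y < b / 2 /\ M < Lc b y.
Proof.
  intros hb. assert (hu := u_beta_pos b). assert (hu1 := u_beta_lt_1 b hb).
  set (K := Rmax (Rmax 1 (M - 2 * ln (1 - u_beta b) + 1)) (- ln ((1 - u_beta b) / 2))).
  assert (hK1 : M - 2 * ln (1 - u_beta b) + 1 <= K)
    by (unfold K; eapply Rle_trans; [apply Rmax_r | apply Rmax_l]).
  assert (hK2 : - ln ((1 - u_beta b) / 2) <= K) by apply Rmax_r.
  set (e := exp (- K)).
  assert (he0 : 0 < e) by apply exp_pos.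
  assert (he1 : e <= (1 - u_beta b) / 2).
  { unfold e. rewrite <- (exp_ln ((1 - u_beta b) / 2)) by lra.
    destruct (Req_dec (- K) (ln ((1 - u_beta b) / 2))) as [E|E]; [rewrite E; lra|].
    left. apply exp_increasing. lra. }
  set (y := b / 2 + ln (1 - e)).
  assert (hl : ln (1 - e) < 0) by (rewrite <- ln_1; apply ln_increasing; lra).
  assert (hy0 : 0 < y).
  { assert (ln (u_beta b) = - (b / 2)) by apply ln_exp.
    assert (ln (u_beta b) < ln (1 - e)) by (apply ln_increasing; lra).
    unfold y; lra. }
  exists y. split; [split; [exact hy0 | unfold y; lra]|].
  assert (E1 : u_beta b * exp y = 1 - e).
  { unfold y, u_beta. rewrite <- exp_plus.
    replace (- (b / 2) + (b / 2 + ln (1 - e))) with (ln (1 - e)) by ring.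
    apply exp_ln; lra. }
  unfold Lc. rewrite E1. replace (1 - (1 - e)) with e by ring. unfold e. rewrite ln_exp.
  assert (0 < u_beta b * exp (- y) < 1)
    by (split; [apply Rmult_lt_0_compat; [lra | apply exp_pos] | apply u_beta_exp_lt_1; lra]).
  assert (ln (1 - u_beta b * exp (- y)) < 0) by (rewrite <- ln_1; apply ln_increasing; lra).
  lra.
Qed.

End Lc_facts.

(** * Averages of [Lc] over segments *)

Definition admissible (b p q : R) := - (b / 2) < q < b / 2 /\ - (b / 2) < p + q < b / 2.

Definition AvgL (b p q : R) := RInt (fun x => Lc b (p * x + q)) 0 1.

Section AvgL_facts.
Variable b : R.

Lemma admissible_point p q x : admissible b p q -> 0 <= x <= 1 -> - (b / 2) < p * x + q < b / 2.
Proof.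
  intros [h1 h2] hx. replace (p * x + q) with (x * (p + q) + (1 - x) * q) by ring.
  now apply convex_comb_in.
Qed.

Lemma admissible_convex_comb p1 q1 p2 q2 t : admissible b p1 q1 -> admissible b p2 q2 ->
  0 <= t <= 1 -> admissible b (t * p1 + (1 - t) * p2) (t * q1 + (1 - t) * q2).
Proof.
  intros [a1 a2] [c1 c2] ht. split; [now apply convex_comb_in|].
  replace (t * p1 + (1 - t) * p2 + (t * q1 + (1 - t) * q2))
    with (t * (p1 + q1) + (1 - t) * (p2 + q2)) by ring.
  now apply convex_comb_in.
Qed.

Lemma admissible_reflect p q : admissible b p q -> admissible b p (- p - q).
Proof. unfold admissible. lra. Qed.

Lemma continuous_Lc_affine p q x : admissible b p q -> 0 <= x <= 1 ->
  continuous (fun x => Lc b (p * x + q)) x.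
Proof.
  intros h hx. apply continuous_of_ex_derive.
  apply (ex_derive_comp (Lc b) (fun x => p * x + q)).
  - eexists; now apply is_derive_Lc, admissible_point.
  - auto_derive; exact I.
Qed.

Lemma continuous_Lc'_affine p q x : admissible b p q -> 0 <= x <= 1 ->
  continuous (fun x => Lc' b (p * x + q)) x.
Proof.
  intros h hx. apply continuous_of_ex_derive.
  apply (ex_derive_comp (Lc' b) (fun x => p * x + q)).
  - now apply ex_derive_Lc', admissible_point.
  - auto_derive; exact I.
Qed.

Lemma ex_RInt_Lc_affine p q a c : admissible b p q -> 0 <= a -> a <= c -> c <= 1 ->
  ex_RInt (fun x => Lc b (p * x + q)) a c.
Proof.
  intros h ha hac hc. apply ex_RInt_continuous_R. intros z hz.
  rewrite Rmin_left, Rmax_right in hz by lra. apply continuous_Lc_affine; auto; lra.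
Qed.

Lemma AvgL_ge_0 p q : admissible b p q -> 0 <= AvgL b p q.
Proof.
  intros h. apply RInt_ge_0; [lra | apply ex_RInt_Lc_affine; auto; lra |].
  intros x hx. apply Lc_ge_0, admissible_point; auto; lra.
Qed.

Lemma AvgL_convex p1 q1 p2 q2 t : admissible b p1 q1 -> admissible b p2 q2 -> 0 <= t <= 1 ->
  AvgL b (t * p1 + (1 - t) * p2) (t * q1 + (1 - t) * q2)
  <= t * AvgL b p1 q1 + (1 - t) * AvgL b p2 q2.
Proof.
  intros h1 h2 ht. unfold AvgL.
  rewrite <- RInt_convex_comb by (apply ex_RInt_Lc_affine; auto; lra).
  apply RInt_le; [lra | apply ex_RInt_Lc_affine; [apply admissible_convex_comb|..]; auto; lra |..].
  - apply ex_RInt_plus_R; apply ex_RInt_scal_R, ex_RInt_Lc_affine; auto; lra.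
  - intros x hx.
    replace ((t * p1 + (1 - t) * p2) * x + (t * q1 + (1 - t) * q2))
      with (t * (p1 * x + q1) + (1 - t) * (p2 * x + q2)) by ring.
    apply Lc_convex; auto; apply admissible_point; auto; lra.
Qed.

(* Two affine functions with different slopes agree at most at one point, so one of the halves
   of [[0, 1]] sees a strict inequality everywhere. *)
Lemma AvgL_strictly_convex p1 q1 p2 q2 t : admissible b p1 q1 -> admissible b p2 q2 ->
  0 < t < 1 -> p1 <> p2 ->
  AvgL b (t * p1 + (1 - t) * p2) (t * q1 + (1 - t) * q2)
  < t * AvgL b p1 q1 + (1 - t) * AvgL b p2 q2.
Proof.
  intros h1 h2 ht hp.
  set (F := fun x => Lc b ((t * p1 + (1 - t) * p2) * x + (t * q1 + (1 - t) * q2))).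
  set (Gf := fun x => t * Lc b (p1 * x + q1) + (1 - t) * Lc b (p2 * x + q2)).
  assert (h3 := admissible_convex_comb p1 q1 p2 q2 t h1 h2 ltac:(lra)).
  assert (exF : forall a c, 0 <= a -> a <= c -> c <= 1 -> ex_RInt F a c)
    by (intros; now apply ex_RInt_Lc_affine).
  assert (exG : forall a c, 0 <= a -> a <= c -> c <= 1 -> ex_RInt Gf a c).
  { intros. apply ex_RInt_plus_R; apply ex_RInt_scal_R, ex_RInt_Lc_affine; auto. }
  assert (EF : forall x, F x = Lc b (t * (p1 * x + q1) + (1 - t) * (p2 * x + q2)))
    by (intros x; unfold F; f_equal; ring).
  assert (le : forall x, 0 <= x <= 1 -> F x <= Gf x).
  { intros x hx. rewrite EF. apply Lc_convex; [apply admissible_point; auto; lra .. | lra]. }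
  set (x0 := (q2 - q1) / (p1 - p2)).
  assert (lt : forall x, 0 <= x <= 1 -> x <> x0 -> F x < Gf x).
  { intros x hx hne. rewrite EF.
    apply Lc_strictly_convex; try apply admissible_point; auto.
    intros e. apply hne. unfold x0. field_simplify_eq; lra. }
  assert (cF : forall x, 0 <= x <= 1 -> continuous F x) by (intros; now apply continuous_Lc_affine).
  assert (cG : forall x, 0 <= x <= 1 -> continuous Gf x).
  { intros x hx. apply continuous_plus_R; apply continuous_scal_R, continuous_Lc_affine; auto. }
  unfold AvgL. rewrite <- RInt_convex_comb by (apply ex_RInt_Lc_affine; auto; lra).
  fold Gf. fold F.
  rewrite <- (RInt_Chasles F 0 (1/2) 1), <- (RInt_Chasles Gf 0 (1/2) 1)
    by first [apply exF; lra | apply exG; lra].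
  destruct (Rle_lt_dec x0 (1/2)) as [c|c].
  - assert (RInt F 0 (1/2) <= RInt Gf 0 (1/2))
      by (apply RInt_le; [lra | apply exF | apply exG | intros; apply le]; lra).
    assert (RInt F (1/2) 1 < RInt Gf (1/2) 1)
      by (apply RInt_lt; [lra | intros; apply cG | intros; apply cF | intros; apply lt]; lra).
    unfold plus; simpl; lra.
  - assert (RInt F (1/2) 1 <= RInt Gf (1/2) 1)
      by (apply RInt_le; [lra | apply exF | apply exG | intros; apply le]; lra).
    assert (RInt F 0 (1/2) < RInt Gf 0 (1/2))
      by (apply RInt_lt; [lra | intros; apply cG | intros; apply cF | intros; apply lt]; lra).
    unfold plus; simpl; lra.
Qed.

Lemma AvgL_reflect p q : admissible b p q -> AvgL b p (- p - q) = AvgL b p q.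
Proof.
  intros h. unfold AvgL.
  rewrite <- (RInt_reflect_01 (fun x => Lc b (p * x + q))) by (apply ex_RInt_Lc_affine; auto; lra).
  apply RInt_ext. intros x _. rewrite <- (Lc_even b (p * (1 - x) + q)). f_equal. ring.
Qed.

Lemma AvgL_centered_le p q : admissible b p q -> AvgL b p (- p / 2) <= AvgL b p q.
Proof.
  intros h.
  assert (C := AvgL_convex p q p (- p - q) (1/2) h (admissible_reflect p q h) ltac:(lra)).
  replace (1 / 2 * p + (1 - 1 / 2) * p) with p in C by field.
  replace (1 / 2 * q + (1 - 1 / 2) * (- p - q)) with (- p / 2) in C by field.
  rewrite AvgL_reflect in C by exact h. lra.
Qed.

(* Jensen's inequality, via the tangent line of [Lc] at the midpoint. *)
Lemma Lc_le_AvgL p q : admissible b p q -> Lc b (p / 2 + q) <= AvgL b p q.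
Proof.
  intros h. set (c := p / 2 + q).
  assert (hc : - (b / 2) < c < b / 2).
  { unfold c. replace (p / 2 + q) with (p * (1/2) + q) by field.
    apply admissible_point; auto; lra. }
  unfold AvgL.
  apply Rle_trans
    with (RInt (fun x => (Lc b c - Lc' b c * c + Lc' b c * q) + (Lc' b c * p) * x) 0 1).
  - rewrite RInt_affine_01. right. unfold c. field.
  - apply RInt_le; [lra | | apply ex_RInt_Lc_affine; auto; lra |].
    + apply ex_RInt_continuous_R. intros z _.
      apply continuous_plus_R; [apply continuous_const_R | apply continuous_scal_R, continuous_id].
    + intros x hx.
      assert (T := convex_tangent_le (Lc b) _ _ c (Lc' b c) (p * x + q) (Lc_convex b) hc
                     (admissible_point p q x h ltac:(lra)) (is_derive_Lc b c hc)).
      lra.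
Qed.

End AvgL_facts.

Definition AvgL_line' (b kap rho s : R) :=
  RInt (fun x => (x + kap) * Lc' b (s * x + (kap * s + rho))) 0 1.

Lemma locally_open_interval lo hi s : lo < s < hi -> locally s (fun t => lo < t < hi).
Proof. apply (open_and _ _ (open_gt lo) (open_lt hi)). Qed.

Lemma locally_strip_affine b a r s0 : - (b / 2) < a * s0 + r < b / 2 ->
  locally s0 (fun s => - (b / 2) < a * s + r < b / 2).
Proof.
  intros h.
  assert (hc : continuous (fun s => a * s + r) s0)
    by (apply continuous_of_ex_derive; auto_derive; exact I).
  exact (hc _ (locally_open_interval _ _ _ h)).
Qed.

Lemma locally_admissible_line b kap rho s0 : admissible b s0 (kap * s0 + rho) ->
  locally s0 (fun s => admissible b s (kap * s + rho)).
Proof.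
  intros [h1 h2]. apply filter_and; [now apply locally_strip_affine|].
  apply (filter_imp (fun s => - (b / 2) < (1 + kap) * s + rho < b / 2)).
  - intros s hs. replace (s + (kap * s + rho)) with ((1 + kap) * s + rho) by ring. exact hs.
  - apply locally_strip_affine. replace ((1 + kap) * s0 + rho) with (s0 + (kap * s0 + rho)) by ring.
    exact h2.
Qed.

Lemma continuity_2d_pt_line kap rho x y :
  continuity_2d_pt (fun u v => u * v + (kap * u + rho)) x y.
Proof.
  apply continuity_2d_pt_plus.
  - apply continuity_2d_pt_mult; [apply continuity_2d_pt_id1 | apply continuity_2d_pt_id2].
  - apply continuity_2d_pt_plus; [|apply continuity_2d_pt_const].
    apply continuity_2d_pt_mult; [apply continuity_2d_pt_const | apply continuity_2d_pt_id1].
Qed.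

Lemma locally_2d_strip b (h : R -> R -> R) x y : continuity_2d_pt h x y ->
  - (b / 2) < h x y < b / 2 -> locally_2d (fun u v => - (b / 2) < h u v < b / 2) x y.
Proof.
  intros hc hi.
  assert (he : 0 < Rmin (h x y + b / 2) (b / 2 - h x y)) by (apply Rmin_glb_lt; lra).
  destruct (hc (mkposreal _ he)) as [d hd]. exists d. intros u v hu hv.
  specialize (hd u v hu hv). simpl in hd. apply Rabs_def2 in hd.
  assert (Rmin (h x y + b / 2) (b / 2 - h x y) <= h x y + b / 2) by apply Rmin_l.
  assert (Rmin (h x y + b / 2) (b / 2 - h x y) <= b / 2 - h x y) by apply Rmin_r.
  lra.
Qed.

Lemma is_derive_Lc_line b kap rho t u0 : - (b / 2) < u0 * t + (kap * u0 + rho) < b / 2 ->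
  is_derive (fun u => Lc b (u * t + (kap * u + rho))) u0
    ((t + kap) * Lc' b (u0 * t + (kap * u0 + rho))).
Proof.
  intros h. apply (is_derive_comp (Lc b) (fun u => u * t + (kap * u + rho))).
  - now apply is_derive_Lc.
  - auto_derive; [exact I | ring].
Qed.

(* Differentiation under the integral sign. *)
Lemma is_derive_AvgL_line b kap rho s0 : admissible b s0 (kap * s0 + rho) ->
  is_derive (fun s => AvgL b s (kap * s + rho)) s0 (AvgL_line' b kap rho s0).
Proof.
  intros h. unfold AvgL, AvgL_line'.
  assert (hloc := locally_admissible_line b kap rho s0 h).
  rewrite (RInt_ext _ (fun t => Derive (fun u => Lc b (u * t + (kap * u + rho))) s0)).
  2: { intros x hx. rewrite Rmin_left, Rmax_right in hx by lra.
       symmetry. apply is_derive_unique, is_derive_Lc_line.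
       apply (admissible_point b); auto; lra. }
  apply (is_derive_RInt_param (fun u t => Lc b (u * t + (kap * u + rho))) 0 1 s0).
  - apply (filter_imp (fun s => admissible b s (kap * s + rho))); [|exact hloc].
    intros s hs t ht. rewrite Rmin_left, Rmax_right in ht by lra.
    eexists. apply is_derive_Lc_line, admissible_point; [exact hs | exact ht].
  - intros t ht. rewrite Rmin_left, Rmax_right in ht by lra.
    apply continuity_2d_pt_ext_loc
      with (f := fun u v => (v + kap) * Lc' b (u * v + (kap * u + rho))).
    + apply locally_2d_impl with (P := fun u v => - (b / 2) < u * v + (kap * u + rho) < b / 2).
      * apply locally_2d_forall. intros u v hi.
        symmetry. now apply is_derive_unique, is_derive_Lc_line.
      * apply locally_2d_strip; [apply continuity_2d_pt_line | now apply admissible_point].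
    + apply continuity_2d_pt_mult.
      * apply continuity_2d_pt_plus; [apply continuity_2d_pt_id2 | apply continuity_2d_pt_const].
      * apply (continuity_1d_2d_pt_comp (Lc' b) (fun u v => u * v + (kap * u + rho))).
        -- apply continuity_pt_filterlim, continuous_of_ex_derive, ex_derive_Lc'.
           now apply admissible_point.
        -- apply continuity_2d_pt_line.
  - apply (filter_imp (fun s => admissible b s (kap * s + rho))); [|exact hloc].
    intros s hs. apply ex_RInt_Lc_affine; [exact hs | lra ..].
Qed.

(* Integration by parts of [Lc] against [x + kap]. *)
Lemma AvgL_line_identity b kap rho s : admissible b s (kap * s + rho) ->
  AvgL b s (kap * s + rho) + s * AvgL_line' b kap rho s
  = (1 + kap) * Lc b (s + (kap * s + rho)) - kap * Lc b (kap * s + rho).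
Proof.
  intros h. unfold AvgL, AvgL_line'.
  set (q := kap * s + rho) in *.
  set (F := fun x => (x + kap) * Lc b (s * x + q)).
  set (dF := fun x => Lc b (s * x + q) + s * ((x + kap) * Lc' b (s * x + q))).
  assert (cLc' : forall x, 0 <= x <= 1 -> continuous (fun x => (x + kap) * Lc' b (s * x + q)) x).
  { intros x hx. apply continuous_mult_R; [|now apply continuous_Lc'_affine].
    apply (continuous_plus_R (fun x => x)); [apply continuous_id | apply continuous_const_R]. }
  assert (hd : forall x, Rmin 0 1 <= x <= Rmax 0 1 -> is_derive F x (dF x)).
  { intros x hx. rewrite Rmin_left, Rmax_right in hx by lra. unfold F, dF.
    assert (hi := admissible_point b s q x h hx).
    assert (hL : is_derive (fun x => Lc b (s * x + q)) x (s * Lc' b (s * x + q))).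
    { apply (is_derive_comp (Lc b) (fun x => s * x + q)); [now apply is_derive_Lc|].
      auto_derive; [exact I | ring]. }
    assert (D1 : is_derive (fun x => x + kap) x 1) by (auto_derive; [exact I | ring]).
    replace (Lc b (s * x + q) + s * ((x + kap) * Lc' b (s * x + q))) with
      (plus (mult 1 (Lc b (s * x + q))) (mult (x + kap) (s * Lc' b (s * x + q))))
      by (unfold plus, mult; simpl; ring).
    exact (is_derive_mult (fun x => x + kap) (fun x => Lc b (s * x + q)) x 1 _ D1 hL Rmult_comm). }
  assert (hc : forall x, Rmin 0 1 <= x <= Rmax 0 1 -> continuous dF x).
  { intros x hx. rewrite Rmin_left, Rmax_right in hx by lra. unfold dF.
    apply continuous_plus_R; [now apply continuous_Lc_affine|].
    apply continuous_scal_R, cLc', hx. }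
  assert (HI := is_RInt_unique _ _ _ _ (is_RInt_derive F dF 0 1 hd hc)).
  assert (e2 : ex_RInt (fun x => (x + kap) * Lc' b (s * x + q)) 0 1).
  { apply ex_RInt_continuous_R. intros z hz. rewrite Rmin_left, Rmax_right in hz by lra.
    now apply cLc'. }
  assert (e1 : ex_RInt (fun x => Lc b (s * x + q)) 0 1) by (apply ex_RInt_Lc_affine; auto; lra).
  rewrite <- (RInt_scal_R _ 0 1 s e2), <- (RInt_plus_R _ _ 0 1 e1 (ex_RInt_scal_R _ 0 1 s e2)).
  fold dF. rewrite HI. unfold F, minus, plus, opp; simpl.
  replace (s * 1 + q) with (s + q) by ring. replace (s * 0 + q) with q by ring. ring.
Qed.

Lemma AvgL_line'_0 b rho : AvgL_line' b 0 rho 0 = Lc' b rho / 2.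
Proof.
  unfold AvgL_line'. rewrite (RInt_ext _ (fun x => 0 + Lc' b rho * x)).
  - rewrite RInt_affine_01. apply Rplus_0_l.
  - intros x _. change ((x + 0) * Lc' b (0 * x + (0 * 0 + rho)) = 0 + Lc' b rho * x).
    replace (0 * x + (0 * 0 + rho)) with rho by ring. ring.
Qed.

Section LineFunction.
Variables (F : R -> R) (b kap rho lo hi : R).
Hypothesis line_admissible : forall s, lo < s < hi -> admissible b s (kap * s + rho).
Hypothesis line_AvgL : forall s, lo < s < hi -> F s = AvgL b s (kap * s + rho).

Lemma is_derive_line s : lo < s < hi -> is_derive F s (AvgL_line' b kap rho s).
Proof.
  intros hs. apply (is_derive_ext_loc (fun s => AvgL b s (kap * s + rho))).
  - apply (filter_imp (fun t => lo < t < hi)); [|exact (locally_open_interval lo hi s hs)].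
    intros t ht. symmetry. now apply line_AvgL.
  - now apply is_derive_AvgL_line, line_admissible.
Qed.

Lemma ex_derive_line s : lo < s < hi -> ex_derive F s.
Proof. intros hs. eexists. now apply is_derive_line. Qed.

Lemma line_identity s d : lo < s < hi -> is_derive F s d ->
  F s + s * d = (1 + kap) * Lc b (s + (kap * s + rho)) - kap * Lc b (kap * s + rho).
Proof.
  intros hs hd.
  rewrite <- (is_derive_unique _ _ _ hd), (is_derive_unique _ _ _ (is_derive_line s hs)).
  rewrite line_AvgL by exact hs. now apply AvgL_line_identity, line_admissible.
Qed.

Lemma line_strictly_convex : strictly_convex_on F lo hi.
Proof.
  intros y1 y2 t h1 h2 hne ht.
  rewrite !line_AvgL by (try apply convex_comb_in; auto; lra).
  replace (kap * (t * y1 + (1 - t) * y2) + rho)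
    with (t * (kap * y1 + rho) + (1 - t) * (kap * y2 + rho)) by ring.
  now apply AvgL_strictly_convex; try apply line_admissible.
Qed.

Lemma line_ge_0 s : lo < s < hi -> 0 <= F s.
Proof. intros hs. rewrite line_AvgL by exact hs. now apply AvgL_ge_0, line_admissible. Qed.

End LineFunction.

(** * The functions [G] and [H] *)

Section G_and_H.
Variables b d : R.
Hypothesis hb : 0 < b.
Hypothesis hd : 0 < d < b.

(* The segments of [G] and [H], written as [kap * k + rho] to fit [LineFunction]. *)
Lemma G_admissible h : - b < h < b -> admissible b h (-1/2 * h + 0).
Proof. unfold admissible. lra. Qed.

Lemma H_admissible s : - d < s < b - d -> admissible b s (0 * s + (d - b / 2)).
Proof. unfold admissible. lra. Qed.

Lemma G_AvgL h : - b < h < b -> G b h = AvgL b h (-1/2 * h + 0).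
Proof.
  intros hh. apply RInt_ext. intros x hx. rewrite Rmin_left, Rmax_right in hx by lra.
  rewrite L_Lc; [f_equal; field | exact hb |].
  replace (h * (x - 1/2)) with (h * x + (-1/2 * h + 0)) by field.
  apply admissible_point; [now apply G_admissible | lra].
Qed.

Lemma H_AvgL s : - d < s < b - d -> H b d s = AvgL b s (0 * s + (d - b / 2)).
Proof.
  intros hs. apply RInt_ext. intros x hx. rewrite Rmin_left, Rmax_right in hx by lra.
  rewrite L_Lc; [f_equal; field | exact hb |].
  replace (s * x + d - b / 2) with (s * x + (0 * s + (d - b / 2))) by field.
  apply admissible_point; [now apply H_admissible | lra].
Qed.

Lemma is_derive_H s : - d < s < b - d -> is_derive (H b d) s (AvgL_line' b 0 (d - b / 2) s).
Proof. exact (is_derive_line _ _ _ _ _ _ H_admissible H_AvgL s). Qed.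

Lemma Derive_G_correct h : - b < h < b -> is_derive (G b) h (Derive (G b) h).
Proof. intros. apply Derive_correct, (ex_derive_line _ _ _ _ _ _ G_admissible G_AvgL); auto. Qed.

Lemma Derive_H_correct s : - d < s < b - d -> is_derive (H b d) s (Derive (H b d) s).
Proof. intros. apply Derive_correct, (ex_derive_line _ _ _ _ _ _ H_admissible H_AvgL); auto. Qed.

Lemma G_identity h dG : - b < h < b -> is_derive (G b) h dG -> G b h + h * dG = Lc b (h / 2).
Proof.
  intros hh hdG. rewrite (line_identity _ _ _ _ _ _ G_admissible G_AvgL h dG hh hdG).
  replace (h + (-1/2 * h + 0)) with (h / 2) by field.
  replace (-1/2 * h + 0) with (- (h / 2)) by field. rewrite Lc_even. field.
Qed.

Lemma H_identity s dH : - d < s < b - d -> is_derive (H b d) s dH ->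
  H b d s + s * dH = Lc b (s + (d - b / 2)).
Proof.
  intros hs hdH. rewrite (line_identity _ _ _ _ _ _ H_admissible H_AvgL s dH hs hdH).
  replace (s + (0 * s + (d - b / 2))) with (s + (d - b / 2)) by field. field.
Qed.

Lemma G_strictly_convex : strictly_convex_on (G b) (- b) b.
Proof. exact (line_strictly_convex _ _ _ _ _ _ G_admissible G_AvgL). Qed.

Lemma H_strictly_convex : strictly_convex_on (H b d) (- d) (b - d).
Proof. exact (line_strictly_convex _ _ _ _ _ _ H_admissible H_AvgL). Qed.

Lemma Derive_G_lt_iff h1 h2 : - b < h1 < b -> - b < h2 < b ->
  (Derive (G b) h1 < Derive (G b) h2 <-> h1 < h2).
Proof.
  apply strictly_convex_Derive_lt_iff; [apply G_strictly_convex |].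
  intros y hy. eexists. now apply Derive_G_correct.
Qed.

Lemma Derive_G_le_iff h1 h2 : - b < h1 < b -> - b < h2 < b ->
  (Derive (G b) h1 <= Derive (G b) h2 <-> h1 <= h2).
Proof.
  apply strictly_convex_Derive_le_iff; [apply G_strictly_convex |].
  intros y hy. eexists. now apply Derive_G_correct.
Qed.

Lemma Derive_H_lt_iff s1 s2 : - d < s1 < b - d -> - d < s2 < b - d ->
  (Derive (H b d) s1 < Derive (H b d) s2 <-> s1 < s2).
Proof.
  apply strictly_convex_Derive_lt_iff; [apply H_strictly_convex |].
  intros y hy. eexists. now apply Derive_H_correct.
Qed.

Lemma Derive_H_le_iff s1 s2 : - d < s1 < b - d -> - d < s2 < b - d ->
  (Derive (H b d) s1 <= Derive (H b d) s2 <-> s1 <= s2).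
Proof.
  apply strictly_convex_Derive_le_iff; [apply H_strictly_convex |].
  intros y hy. eexists. now apply Derive_H_correct.
Qed.

Lemma H_ge_0 s : - d < s < b - d -> 0 <= H b d s.
Proof. exact (line_ge_0 _ _ _ _ _ _ H_admissible H_AvgL s). Qed.

Lemma G_0 : G b 0 = 0.
Proof.
  rewrite G_AvgL by lra. unfold AvgL.
  rewrite (RInt_ext _ (fun _ => 0)), RInt_const_R; [ring|].
  intros x _. replace (0 * x + (-1/2 * 0 + 0)) with 0 by field. apply Lc_0.
Qed.

Lemma H_0 : H b d 0 = Lc b (d - b / 2).
Proof.
  rewrite H_AvgL by lra. unfold AvgL.
  rewrite (RInt_ext _ (fun _ => Lc b (d - b / 2))), RInt_const_R; [ring|].
  intros x _. f_equal. ring.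
Qed.

Lemma G_le_H s : - d < s < b - d -> G b s <= H b d s.
Proof.
  intros hs. rewrite H_AvgL, G_AvgL by lra.
  replace (-1/2 * s + 0) with (- s / 2) by field.
  now apply AvgL_centered_le, H_admissible.
Qed.

Lemma G_H_junction : G b (b - 2 * d) = H b d (b - 2 * d).
Proof. apply RInt_ext. intros x _. f_equal. field. Qed.

Lemma Derive_G_0 : Derive (G b) 0 = 0.
Proof.
  apply (is_derive_interior_min_0 (G b) (- b) b 0); [lra | | apply Derive_G_correct; lra].
  intros y hy. rewrite G_0.
  exact (line_ge_0 _ _ _ _ _ _ G_admissible G_AvgL y hy).
Qed.

(* [H] is then minimal at [0], where it vanishes. *)
Lemma Derive_H_0 : d = b / 2 -> Derive (H b d) 0 = 0.
Proof.
  intros e.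
  apply (is_derive_interior_min_0 (H b d) (- d) (b - d) 0); [lra | | apply Derive_H_correct; lra].
  intros y hy. rewrite H_0. replace (d - b / 2) with 0 by lra. rewrite Lc_0. exact (H_ge_0 y hy).
Qed.

(* Differentiating the identities of [G] and [H] at the junction point, where [G = H]. *)
Lemma Derive_G_H_junction : 0 <= b - 2 * d -> Derive (G b) (b - 2 * d) = Derive (H b d) (b - 2 * d).
Proof.
  intros hj. destruct (Req_dec (b - 2 * d) 0) as [e|ne].
  - rewrite e, Derive_G_0, Derive_H_0; lra.
  - set (j := b - 2 * d) in *.
    assert (IG := G_identity j _ ltac:(unfold j; lra) (Derive_G_correct j ltac:(unfold j; lra))).
    assert (IH := H_identity j _ ltac:(unfold j; lra) (Derive_H_correct j ltac:(unfold j; lra))).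
    replace (j + (d - b / 2)) with (j / 2) in IH by (unfold j; field).
    assert (HJ : G b j = H b d j) by apply G_H_junction. rewrite <- HJ in IH.
    assert (E : j * (Derive (G b) j - Derive (H b d) j) = 0) by lra.
    apply Rmult_integral in E. lra.
Qed.

End G_and_H.

Lemma the_unique_spec (P : R -> Prop) : (exists x, P x) -> P (the_unique P).
Proof. intros h. unfold the_unique. apply epsilon_spec, h. Qed.

(* The tangent at [s] passes below [f 0], i.e. [f s - s d <= f 0]. *)
Lemma convex_derive_gt (f : R -> R) lo hi s d c q : convex_on f lo hi -> lo < 0 < hi ->
  lo < s < hi -> 0 < s <= c -> 0 <= q -> is_derive f s d ->
  f 0 + 2 * c * q < f s + s * d -> q < d.
Proof.
  intros hc h0 hs hsc hq hd hgt.
  assert (T := convex_tangent_le f lo hi s d 0 hc hs h0 hd).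
  destruct (Rlt_le_dec q d) as [ok|le]; [exact ok|].
  assert (s * d <= s * q) by (apply Rmult_le_compat_l; lra).
  assert (s * q <= c * q) by (apply Rmult_le_compat_r; lra).
  lra.
Qed.

Lemma htilde_spec b q : 0 < b -> 0 < q -> 0 < htilde b q < b /\ is_derive (G b) (htilde b q) q.
Proof.
  intros hb hq.
  assert (hGc := convex_of_strictly_convex _ _ _ (G_strictly_convex b hb)).
  assert (P : 0 <= htilde b q < b /\ is_derive (G b) (htilde b q) q).
  { apply (the_unique_spec (fun h => 0 <= h < b /\ is_derive (G b) h q)).
    destruct (Lc_unbounded b (2 * b * q) hb) as [y [hy hL]].
    assert (D := Derive_G_correct b hb (2 * y) ltac:(lra)).
    assert (hq1 : q < Derive (G b) (2 * y)).
    { apply (convex_derive_gt (G b) (- b) b (2 * y) _ b q hGc); try lra; auto.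
      rewrite G_0, (G_identity b hb) by (auto; lra).
      replace (2 * y / 2) with y by field. lra. }
    destruct (derive_intermediate_value (G b) 0 (2 * y) q) as [h [hh hD]]; try lra.
    - intros z hz. eexists. apply (Derive_G_correct b hb). lra.
    - rewrite Derive_G_0 by exact hb. exact hq.
    - exists h. split; [lra | exact hD]. }
  destruct P as [[[lt|e] p1] p2]; [split; [split|]; assumption|].
  rewrite <- e in p2. apply is_derive_unique in p2. rewrite Derive_G_0 in p2 by exact hb. lra.
Qed.

Section Inverse_derivatives.
Variables b d : R.
Hypothesis hb : 0 < b.
Hypothesis hd : 0 < d < b.

Lemma Derive_H_le_0_somewhere : exists s0, - d < s0 < b - d /\ Derive (H b d) s0 <= 0.
Proof.
  destruct (Rle_lt_dec (d - b / 2) 0) as [hm|hm].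
  - exists 0. split; [lra|].
    rewrite (is_derive_unique _ _ _ (is_derive_H b d hb hd 0 ltac:(lra))), AvgL_line'_0.
    destruct hm as [lt|e].
    + assert (Lc' b (d - b / 2) < Lc' b 0) by (apply Lc'_increasing; lra).
      rewrite Lc'_0 in *. lra.
    + rewrite e, Lc'_0. lra.
  - exists (- 2 * (d - b / 2)). split; [lra|].
    set (s0 := - 2 * (d - b / 2)).
    assert (hs0 : - d < s0 < b - d) by (unfold s0; lra).
    assert (I := H_identity b d hb hd s0 _ hs0 (Derive_H_correct b d hb hd s0 hs0)).
    replace (s0 + (d - b / 2)) with (- (d - b / 2)) in I by (unfold s0; ring).
    rewrite Lc_even in I.
    assert (B : H b d s0 <= Lc b (d - b / 2)).
    { rewrite (H_AvgL b d hb hd) by exact hs0. unfold AvgL.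
      apply Rle_trans with (RInt (fun _ => Lc b (d - b / 2)) 0 1); [| rewrite RInt_const_R; lra].
      apply RInt_le; [lra | apply ex_RInt_Lc_affine; [apply H_admissible | ..]; lra
        | apply ex_RInt_continuous_R; intros; apply continuous_const_R |].
      intros x hx. apply Lc_le_Rabs; [|lra].
      replace (s0 * x + (0 * s0 + (d - b / 2))) with ((d - b / 2) * (1 - 2 * x))
        by (unfold s0; ring).
      rewrite Rabs_mult, Rabs_pos_eq by lra.
      assert (Rabs (1 - 2 * x) <= 1) by (apply Rabs_le; lra).
      nra. }
    assert (hprod : 0 <= s0 * Derive (H b d) s0) by lra.
    assert (hneg : s0 < 0) by (unfold s0; lra).
    destruct (Rle_lt_dec (Derive (H b d) s0) 0) as [ok|pos]; [exact ok|].
    assert (s0 * Derive (H b d) s0 < 0) by (apply Rmult_neg_pos; assumption). lra.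
Qed.

Lemma s_delta_spec q : 0 < q -> - d < s_delta b d q < b - d /\ is_derive (H b d) (s_delta b d q) q.
Proof.
  intros hq. apply (the_unique_spec (fun s => - d < s < b - d /\ is_derive (H b d) s q)).
  assert (hHc := convex_of_strictly_convex _ _ _ (H_strictly_convex b d hb hd)).
  destruct Derive_H_le_0_somewhere as [s0 [hs0 N0]].
  set (m := d - b / 2).
  destruct (Lc_unbounded b (Lc b m + 2 * b * q) hb) as [y [hy hL]].
  assert (hLm : 0 <= Lc b m) by (apply Lc_ge_0; unfold m; lra).
  assert (hym : m < y).
  { destruct (Rlt_le_dec m y) as [ok|le]; [exact ok|].
    assert (Lc b y <= Lc b m) by (apply Lc_le_Rabs; [rewrite Rabs_pos_eq |]; unfold m in *; lra).
    assert (0 <= b * q) by (apply Rmult_le_pos; lra). lra. }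
  set (s1 := y - m).
  assert (hs1 : - d < s1 < b - d) by (unfold s1, m in *; lra).
  assert (D1 := Derive_H_correct b d hb hd s1 hs1).
  assert (hq1 : q < Derive (H b d) s1).
  { apply (convex_derive_gt (H b d) (- d) (b - d) s1 _ b q hHc); auto; try (unfold s1, m in *; lra).
    rewrite H_0, (H_identity b d hb hd) by auto. fold m.
    replace (s1 + m) with y by (unfold s1; ring). lra. }
  assert (hs01 : s0 < s1)
    by (apply (Derive_H_lt_iff b d hb hd s0 s1 hs0 hs1); lra).
  destruct (derive_intermediate_value (H b d) s0 s1 q) as [s [hs hD]]; try lra.
  - intros z hz. eexists. apply (Derive_H_correct b d hb hd). lra.
  - exists s. split; [lra | exact hD].
Qed.

End Inverse_derivatives.

Definition Gamma_rat (u : R) := (u * u + u * u * u) / (1 - u).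

Lemma Gamma_Gamma_rat b : Gamma b = Gamma_rat (u_beta b).
Proof.
  unfold Gamma, Gamma_rat, u_beta.
  replace (exp (- b)) with (exp (- (b / 2)) * exp (- (b / 2)))
    by (rewrite <- exp_plus; f_equal; field).
  replace (exp (- (3 * b / 2))) with (exp (- (b / 2)) * exp (- (b / 2)) * exp (- (b / 2)))
    by (rewrite <- !exp_plus; f_equal; field).
  reflexivity.
Qed.

Lemma Gamma_rat_increasing u1 u2 : 0 < u1 -> u1 < u2 -> u2 < 1 -> Gamma_rat u1 < Gamma_rat u2.
Proof.
  intros h1 h12 h2. unfold Gamma_rat.
  apply (Rmult_lt_reg_r ((1 - u1) * (1 - u2))); [apply Rmult_lt_0_compat; lra|].
  field_simplify; [|lra..].
  set (K := (u2 + u1) * (1 - u1 * u2) + u1 * u1 + u2 * u2).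
  assert (hK : 0 < K).
  { assert (u1 * u2 < 1) by nra.
    assert (0 < (u2 + u1) * (1 - u1 * u2)) by (apply Rmult_lt_0_compat; lra).
    unfold K; nra. }
  assert (0 < (u2 - u1) * K) by (apply Rmult_lt_0_compat; lra).
  unfold K in *. nra.
Qed.

(* [Gamma_rat u = 1] iff [u^3 + u^2 + u = 1]. *)
Lemma cubic_root_exists : exists u, 1/2 < u < 3/5 /\ u * u * u + u * u + u - 1 = 0.
Proof.
  destruct (IVT (fun u => u * u * u + u * u + u - 1) (1/2) (3/5)) as [z [hz e]]; try lra.
  - intros x. apply derivable_continuous_pt. reg.
  - exists z. split; [|exact e].
    destruct hz as [[lt1|e1] [lt2|e2]]; subst; lra.
Qed.

Lemma beta_c_spec : 0 < beta_c /\ Gamma beta_c = 1.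
Proof.
  apply (the_unique_spec (fun b => 0 < b /\ Gamma b = 1)).
  destruct cubic_root_exists as [u [hu e]].
  exists (- 2 * ln u). split.
  - assert (ln u < 0) by (rewrite <- ln_1; apply ln_increasing; lra). lra.
  - rewrite Gamma_Gamma_rat. unfold u_beta. replace (- (- 2 * ln u / 2)) with (ln u) by field.
    rewrite exp_ln by lra. unfold Gamma_rat. field_simplify_eq; lra.
Qed.

Lemma beta_c_pos b : b > beta_c -> 0 < b.
Proof. destruct beta_c_spec. lra. Qed.

Lemma Gamma_lt_1 b : b > beta_c -> 0 < Gamma b < 1.
Proof.
  intros h. destruct beta_c_spec as [h0 h1]. rewrite Gamma_Gamma_rat in *.
  assert (hb : 0 < b) by lra.
  assert (hu := u_beta_pos b). assert (hu1 := u_beta_lt_1 b hb).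
  split.
  - apply Rdiv_lt_0_compat; nra.
  - rewrite <- h1. apply Gamma_rat_increasing; auto.
    + apply exp_increasing. lra.
    + apply u_beta_lt_1. lra.
Qed.

Lemma x_beta_spec b : b > beta_c -> 0 < x_beta b < b / 2 /\ Lc b (x_beta b) = - ln (Gamma b).
Proof.
  intros h. assert (hb := beta_c_pos b h). assert (hG := Gamma_lt_1 b h).
  assert (hl : ln (Gamma b) < 0) by (rewrite <- ln_1; apply ln_increasing; lra).
  assert (EX : exists x, 0 < x < b / 2 /\ L b x = - ln (Gamma b)).
  { destruct (Lc_unbounded b (- ln (Gamma b)) hb) as [y [hy hL]].
    destruct (IVT_interv (fun x => Lc b x - - ln (Gamma b)) 0 y) as [z [hz e]];
      [| lra | rewrite Lc_0; lra | lra |].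
    - intros a ha. apply continuity_pt_minus; [|apply continuity_pt_const; intros ? ?; reflexivity].
      apply continuity_pt_filterlim, continuous_of_ex_derive. eexists. apply is_derive_Lc. lra.
    - cbv beta in e. assert (z <> 0) by (intros ->; rewrite Lc_0 in e; lra).
      exists z. split; [lra|]. rewrite L_Lc; lra. }
  apply the_unique_spec in EX. unfold x_beta. destruct EX as [h1 h2].
  split; [exact h1|]. rewrite <- L_Lc; [exact h2 | exact hb | lra].
Qed.

Section Deltabar.
Variables b x : R.
Hypothesis hb : 0 < b.
Hypothesis hx : 0 < x < b / 2.

Let ratio d := (Lc b x - AvgL b (b / 2 - d - x) x) / (b / 2 - d - x).

(* With [s = b/2 - d - x] the segment of [H] runs from [-(x + s)] to [-x]; reflected, from [x]
   to [x + s]. *)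
Lemma Derive_H_shifted_x_eq d : 0 < d < b -> b / 2 - d - x <> 0 ->
  Derive (H b d) (b / 2 - d - x) = ratio d.
Proof.
  intros hd hs. unfold ratio. set (s := b / 2 - d - x) in *.
  assert (hdom : - d < s < b - d) by (unfold s; lra).
  assert (I := H_identity b d hb hd s _ hdom (Derive_H_correct b d hb hd s hdom)).
  replace (s + (d - b / 2)) with (- x) in I by (unfold s; ring).
  rewrite Lc_even, H_AvgL, <- AvgL_reflect in I by (try apply H_admissible; auto).
  replace (- s - (0 * s + (d - b / 2))) with x in I by (unfold s; ring).
  field_simplify_eq; [lra | exact hs].
Qed.

Lemma continuous_ratio d : 0 < d < b -> b / 2 - d - x <> 0 -> continuous ratio d.
Proof.
  intros hd hs. apply continuous_of_ex_derive.
  apply ex_derive_div; [| auto_derive; exact I | exact hs].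
  apply (ex_derive_minus (fun _ => Lc b x)); [apply ex_derive_const|].
  apply (ex_derive_comp (fun s => AvgL b s x) (fun d => b / 2 - d - x)); [|auto_derive; exact I].
  apply (ex_derive_ext (fun s => AvgL b s (0 * s + x))).
  - intros s. now rewrite Rmult_0_l, Rplus_0_l.
  - eexists. apply is_derive_AvgL_line. unfold admissible. lra.
Qed.

Lemma Derive_H_shifted_x_zero d : 0 < d < b -> b / 2 - d - x = 0 -> Derive (H b d) 0 < 0.
Proof.
  intros hd e.
  assert (hxd : - d < x < b - d) by lra.
  assert (I := H_identity b d hb hd x _ hxd (Derive_H_correct b d hb hd x hxd)).
  replace (x + (d - b / 2)) with 0 in I by lra. rewrite Lc_0 in I.
  assert (hH := H_ge_0 b d hb hd x hxd).
  assert (Derive (H b d) 0 < Derive (H b d) x) by (apply Derive_H_lt_iff; lra).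
  nra.
Qed.

Lemma Derive_H_shifted_x_pos_left d : 0 < d < b -> 0 < Derive (H b d) (b / 2 - d - x) ->
  exists d', 0 < d' < d /\ 0 < Derive (H b d') (b / 2 - d' - x).
Proof.
  intros hd pos.
  destruct (Req_dec (b / 2 - d - x) 0) as [e|ne].
  { rewrite e in pos. generalize (Derive_H_shifted_x_zero d hd e). lra. }
  rewrite Derive_H_shifted_x_eq in pos by assumption.
  assert (near : locally d (fun d' => 0 < d' < b /\ b / 2 - d' - x <> 0 /\ 0 < ratio d')).
  { apply filter_and; [apply locally_open_interval; lra|]. apply filter_and.
    - assert (hc : continuous (fun d => b / 2 - d - x) d)
        by (apply continuous_of_ex_derive; auto_derive; exact I).
      exact (hc _ (open_neq 0 _ ne)).
    - exact (continuous_ratio d hd ne _ (open_gt 0 _ pos)). }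
  destruct near as [eps heps]. assert (he := cond_pos eps).
  destruct (heps (d - eps / 2)) as [hd' [ns' pos']].
  { unfold ball; simpl; unfold AbsRing_ball, abs, minus, plus, opp; simpl.
    rewrite Rabs_left; lra. }
  exists (d - eps / 2). split; [lra|]. now rewrite Derive_H_shifted_x_eq.
Qed.

Lemma Derive_H_shifted_x_le_0 d : 0 < d < b ->
  Rbar_le (Finite d) (Glb_Rbar (fun d' => 0 < d' < b /\ Derive (H b d') (b / 2 - d' - x) > 0)) ->
  Derive (H b d) (b / 2 - d - x) <= 0.
Proof.
  intros hd hdb.
  destruct (Rle_lt_dec (Derive (H b d) (b / 2 - d - x)) 0) as [ok|pos]; [exact ok|exfalso].
  destruct (Derive_H_shifted_x_pos_left d hd pos) as [d' [hd' pos']].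
  destruct (Glb_Rbar_correct (fun d' => 0 < d' < b /\ Derive (H b d') (b / 2 - d' - x) > 0))
    as [lb _].
  assert (Y := Rbar_le_trans _ _ _ hdb (lb d' ltac:(split; lra))). simpl in Y. lra.
Qed.

End Deltabar.

(** * The variational formula for [psi] *)

Section Psi.
Variables b d : R.
Hypothesis hb : 0 < b.
Hypothesis hd : 0 < d < b.

(* In the regime [d <= delta0 q], [psi q] is read off [G] at the point [htilde q] of slope [q],
   otherwise off [H] at [s_delta q]; [psi_edge q] is the far endpoint [k/2], resp.
   [k + d - b/2], of the segment of arguments of [L]. *)
Definition psi_slope q :=
  if Rle_dec d (delta0 b q) then htilde b q else s_delta b d q.
Definition psi_value q :=
  if Rle_dec d (delta0 b q) then G b (htilde b q) else H b d (s_delta b d q).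
Definition psi_edge q :=
  if Rle_dec d (delta0 b q) then htilde b q / 2 else s_delta b d q + (d - b / 2).

Lemma G_regime q : d <= delta0 b q <-> htilde b q <= b - 2 * d.
Proof. unfold delta0. lra. Qed.

Lemma psi_eq q : psi b q d = psi_value q - q * psi_slope q.
Proof. unfold psi, psi_value, psi_slope. now destruct (Rle_dec d (delta0 b q)). Qed.

Lemma psi_value_add q : 0 < q -> psi_value q + q * psi_slope q = Lc b (psi_edge q).
Proof.
  intros hq. unfold psi_value, psi_slope, psi_edge. rewrite Rmult_comm.
  destruct (Rle_dec d (delta0 b q)).
  - destruct (htilde_spec b q hb hq) as [h1 h2]. apply G_identity; auto. lra.
  - destruct (s_delta_spec b d hb hd q hq) as [h1 h2]. now apply H_identity.
Qed.

Lemma Rabs_psi_slope_le q : 0 < q -> Rabs (psi_slope q) <= b.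
Proof.
  intros hq. unfold psi_slope. destruct (Rle_dec d (delta0 b q)).
  - destruct (htilde_spec b q hb hq) as [h1 h2]. rewrite Rabs_pos_eq; lra.
  - destruct (s_delta_spec b d hb hd q hq) as [h1 h2]. apply Rabs_le. lra.
Qed.

Lemma G_tangent_le h1 h2 dG : - b < h1 < b -> - b < h2 < b -> is_derive (G b) h1 dG ->
  G b h1 + dG * (h2 - h1) <= G b h2.
Proof.
  intros h1' h2' hdG. apply (convex_tangent_le (G b) (- b) b); auto.
  apply convex_of_strictly_convex, G_strictly_convex, hb.
Qed.

Lemma H_tangent_le s1 s2 dH : - d < s1 < b - d -> - d < s2 < b - d -> is_derive (H b d) s1 dH ->
  H b d s1 + dH * (s2 - s1) <= H b d s2.
Proof.
  intros h1 h2 hdH. apply (convex_tangent_le (H b d) (- d) (b - d)); auto.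
  apply convex_of_strictly_convex, H_strictly_convex; assumption.
Qed.

(* In the mixed case the tangent to [H] is continued past the junction by the tangent to [G]. *)
Lemma psi_le p r : 0 < p -> 0 < r -> psi b p d <= psi_value r - p * psi_slope r.
Proof.
  intros hp hr. rewrite psi_eq. unfold psi_value, psi_slope.
  destruct (htilde_spec b p hb hp) as [hp1 hp2], (s_delta_spec b d hb hd p hp) as [sp1 sp2].
  destruct (htilde_spec b r hb hr) as [hr1 hr2], (s_delta_spec b d hb hd r hr) as [sr1 sr2].
  destruct (Rle_dec d (delta0 b p)) as [gp|hp'], (Rle_dec d (delta0 b r)) as [gr|hr'].
  - assert (T := G_tangent_le (htilde b p) (htilde b r) p ltac:(lra) ltac:(lra) hp2). lra.
  - assert (T := G_tangent_le (htilde b p) (s_delta b d r) p ltac:(lra) ltac:(lra) hp2).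
    assert (GH := G_le_H b d hb hd (s_delta b d r) sr1). lra.
  - set (j := b - 2 * d).
    apply G_regime in gr. rewrite G_regime in hp'. fold j in gr, hp'.
    assert (T1 := H_tangent_le (s_delta b d p) j p sp1 ltac:(unfold j; lra) sp2).
    assert (HJ : G b j = H b d j) by apply G_H_junction.
    assert (Dj := Derive_G_correct b hb j ltac:(unfold j; lra)).
    assert (T2 := G_tangent_le j (htilde b r) _ ltac:(unfold j; lra) ltac:(lra) Dj).
    assert (M : Derive (G b) j < p).
    { rewrite <- (is_derive_unique _ _ _ hp2).
      apply (Derive_G_lt_iff b hb); [unfold j; lra | lra | now apply Rnot_le_lt]. }
    assert (0 <= (p - Derive (G b) j) * (j - htilde b r)) by (apply Rmult_le_pos; lra).
    nra.
  - assert (T := H_tangent_le (s_delta b d p) (s_delta b d r) p sp1 sr1 sp2). lra.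
Qed.

Definition T_sqrt t := Tq b d (t * t).

Lemma T_sqrt_eq t : 0 < t -> T_sqrt t = (ln (Gamma b) + psi b (t * t) d) / t.
Proof.
  intros ht. unfold T_sqrt, Tq, T. rewrite sqrt_square by lra.
  replace (1 / (1 / t) ^ 2) with (t * t) by (field; lra). field. lra.
Qed.

(* Comparing [psi (a^2)] with the candidate at [c^2] gives a one-sided difference bound;
   its sign is governed by [Lc (psi_edge c^2) + ln Gamma]. *)
Lemma T_sqrt_sub_le a c : 0 < a -> 0 < c ->
  T_sqrt a - T_sqrt c
  <= (Lc b (psi_edge (c * c)) + ln (Gamma b)) * (1 / a - 1 / c) + b * (c - a) * (c - a) / a.
Proof.
  intros ha hc. assert (hc2 : 0 < c * c) by nra. assert (ha2 : 0 < a * a) by nra.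
  rewrite !T_sqrt_eq by assumption.
  assert (U := psi_le (a * a) (c * c) ha2 hc2).
  assert (E := psi_eq (c * c)). assert (I := psi_value_add (c * c) hc2).
  assert (B := Rabs_psi_slope_le (c * c) hc2).
  set (k := psi_slope (c * c)) in *. set (V := psi_value (c * c)) in *.
  set (L0 := Lc b (psi_edge (c * c))) in *. set (lG := ln (Gamma b)).
  assert (A1 : (lG + psi b (a * a) d) / a <= (L0 + lG - (c * c + a * a) * k) / a)
    by (apply Rmult_le_compat_r; [left; apply Rinv_0_lt_compat; exact ha | lra]).
  replace ((lG + psi b (c * c) d) / c) with ((L0 + lG - 2 * (c * c) * k) / c)
    by (rewrite E; f_equal; lra).
  assert (A3 : (L0 + lG - (c * c + a * a) * k) / a - (L0 + lG - 2 * (c * c) * k) / c =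
     (L0 + lG) * (1 / a - 1 / c) - k * ((c - a) * (c - a) / a)) by (field; lra).
  assert (A4 : - k * ((c - a) * (c - a) / a) <= b * ((c - a) * (c - a) / a)).
  { apply Rmult_le_compat_r; [apply Rdiv_le_0_compat; [apply Rle_0_sqr | exact ha]|].
    generalize (Rabs_maj2 k). lra. }
  replace (b * (c - a) * (c - a) / a) with (b * ((c - a) * (c - a) / a)) by (field; lra).
  lra.
Qed.

End Psi.

(** * The maximizer of [q |-> T (1 / sqrt q)] *)

Section Maximizer.
Variables b d x : R.
Hypothesis hb : 0 < b.
Hypothesis hd : 0 < d < b.
Hypothesis hx : 0 < x < b / 2.
Hypothesis hxl : Lc b x = - ln (Gamma b).
Hypothesis hdb : Derive (H b d) (b / 2 - d - x) <= 0.

(* The slope at which [psi_edge] crosses [x]: on the [G] branch [htilde qbar = 2 x],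
   on the [H] branch [s_delta qbar + d - b/2 = x]. *)
Definition qbar :=
  if Rle_dec (2 * x) (b - 2 * d) then Derive (G b) (2 * x) else Derive (H b d) (x - (d - b / 2)).

Let DH := Derive_H_correct b d hb hd.

(* On the [H] branch, the identity [H s + s H'(s) = Lc x] at [s = x - d + b/2] is combined with
   Jensen ([s < 0]), the value [H'(0) = Lc'(d - b/2) / 2] ([s = 0]) or the tangent at [0] ([s > 0]). *)
Lemma qbar_pos : 0 < qbar.
Proof.
  unfold qbar. destruct (Rle_dec (2 * x) (b - 2 * d)) as [c|c].
  - rewrite <- (Derive_G_0 b hb). apply Derive_G_lt_iff; lra.
  - set (s := x - (d - b / 2)).
    assert (hs : - d < s < b - d) by (unfold s; lra).
    assert (I := H_identity b d hb hd s _ hs (DH s hs)).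
    replace (s + (d - b / 2)) with x in I by (unfold s; ring).
    destruct (Rtotal_order s 0) as [neg|[zero|pos]].
    + assert (Jn := Lc_le_AvgL b s (0 * s + (d - b / 2)) (H_admissible b d hd s hs)).
      rewrite <- (H_AvgL b d hb hd s hs) in Jn.
      replace (s / 2 + (0 * s + (d - b / 2))) with ((x + (d - b / 2)) / 2) in Jn
        by (unfold s; field).
      assert (hlt : Lc b x < Lc b ((x + (d - b / 2)) / 2))
        by (apply Lc_increasing; unfold s in neg; lra).
      assert (hprod : s * Derive (H b d) s < 0) by lra.
      destruct (Rle_lt_dec (Derive (H b d) s) 0) as [le|gt]; [nra | exact gt].
    + rewrite (is_derive_unique _ _ _ (is_derive_H b d hb hd s hs)), zero, AvgL_line'_0.
      assert (hlt : Lc' b 0 < Lc' b (d - b / 2)) by (apply Lc'_increasing; unfold s in zero; lra).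
      rewrite Lc'_0 in *. lra.
    + assert (T := H_tangent_le b d hb hd s 0 _ hs ltac:(lra) (DH s hs)).
      rewrite (H_0 b d hb hd) in T.
      assert (hlt : Lc b (d - b / 2) < Lc b x)
        by (apply Lc_lt_Rabs; [apply Rabs_def1 |]; unfold s in pos; lra).
      assert (hprod : 0 < s * Derive (H b d) s) by lra.
      destruct (Rle_lt_dec (Derive (H b d) s) 0) as [le|gt]; [nra | exact gt].
Qed.

Lemma psi_edge_cmp_G_branch q : 2 * x <= b - 2 * d -> 0 < q ->
  (qbar <= q -> x <= psi_edge b d q) /\ (q <= qbar -> Rabs (psi_edge b d q) <= x) /\
  (q < qbar -> Rabs (psi_edge b d q) < x).
Proof.
  intros c hq. unfold qbar, psi_edge. destruct (Rle_dec (2 * x) (b - 2 * d)) as [_|nc]; [|lra].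
  destruct (htilde_spec b q hb hq) as [hh1 hh2], (s_delta_spec b d hb hd q hq) as [hs1 hs2].
  apply is_derive_unique in hh2. apply is_derive_unique in hs2.
  destruct (Rle_dec d (delta0 b q)) as [rg|rh].
  - rewrite Rabs_pos_eq by lra.
    repeat split; intros cmp; rewrite <- hh2 in cmp.
    + enough (2 * x <= htilde b q) by lra. apply Derive_G_le_iff in cmp; lra.
    + enough (htilde b q <= 2 * x) by lra. apply Derive_G_le_iff in cmp; lra.
    + enough (htilde b q < 2 * x) by lra. apply Derive_G_lt_iff in cmp; lra.
  - rewrite G_regime in rh.
    assert (qj : Derive (G b) (b - 2 * d) < q) by (rewrite <- hh2; apply Derive_G_lt_iff; lra).
    assert (q2x : Derive (G b) (2 * x) <= Derive (G b) (b - 2 * d)) by (apply Derive_G_le_iff; lra).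
    rewrite Derive_G_H_junction in qj, q2x by lra.
    assert (hjs : b - 2 * d < s_delta b d q)
      by (rewrite <- hs2 in qj; apply Derive_H_lt_iff in qj; lra).
    repeat split; intros; lra.
Qed.

Lemma psi_edge_cmp_H_branch q : b - 2 * d < 2 * x -> 0 < q ->
  (qbar <= q -> x <= psi_edge b d q) /\ (q <= qbar -> Rabs (psi_edge b d q) <= x) /\
  (q < qbar -> Rabs (psi_edge b d q) < x).
Proof.
  intros c hq. unfold qbar, psi_edge. destruct (Rle_dec (2 * x) (b - 2 * d)) as [nc|_]; [lra|].
  destruct (htilde_spec b q hb hq) as [hh1 hh2], (s_delta_spec b d hb hd q hq) as [hs1 hs2].
  apply is_derive_unique in hh2. apply is_derive_unique in hs2.
  destruct (Rle_dec d (delta0 b q)) as [rg|rh].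
  - rewrite G_regime in rg.
    assert (hGj : Derive (G b) (htilde b q) <= Derive (G b) (b - 2 * d))
      by (apply Derive_G_le_iff; lra).
    rewrite Derive_G_H_junction, hh2 in hGj by lra.
    assert (Derive (H b d) (b - 2 * d) < Derive (H b d) (x - (d - b / 2)))
      by (apply Derive_H_lt_iff; lra).
    rewrite Rabs_pos_eq by lra. repeat split; intros; lra.
  - (* This is where [delta <= deltabar] enters. *)
    assert (low : b / 2 - d - x < s_delta b d q)
      by (apply (Derive_H_lt_iff b d hb hd); rewrite ?hs2; lra).
    repeat split; intros cmp; rewrite <- hs2 in cmp.
    + enough (x - (d - b / 2) <= s_delta b d q) by lra. apply Derive_H_le_iff in cmp; lra.
    + enough (s_delta b d q <= x - (d - b / 2)) by (apply Rabs_le; lra).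
      apply Derive_H_le_iff in cmp; lra.
    + enough (s_delta b d q < x - (d - b / 2)) by (apply Rabs_def1; lra).
      apply Derive_H_lt_iff in cmp; lra.
Qed.

Lemma psi_edge_cmp q : 0 < q ->
  (qbar <= q -> x <= psi_edge b d q) /\ (q <= qbar -> Rabs (psi_edge b d q) <= x) /\
  (q < qbar -> Rabs (psi_edge b d q) < x).
Proof.
  intros hq. destruct (Rle_lt_dec (2 * x) (b - 2 * d)).
  - now apply psi_edge_cmp_G_branch.
  - now apply psi_edge_cmp_H_branch.
Qed.

Lemma psi_edge_lt_half q : 0 < q -> psi_edge b d q < b / 2.
Proof.
  intros hq. unfold psi_edge. destruct (Rle_dec d (delta0 b q)).
  - destruct (htilde_spec b q hb hq). lra.
  - destruct (s_delta_spec b d hb hd q hq). lra.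
Qed.

Lemma Lc_psi_edge_cmp q : 0 < q ->
  (qbar <= q -> Lc b x <= Lc b (psi_edge b d q)) /\
  (q <= qbar -> Lc b (psi_edge b d q) <= Lc b x) /\
  (q < qbar -> Lc b (psi_edge b d q) < Lc b x).
Proof.
  intros hq. destruct (psi_edge_cmp q hq) as [c1 [c2 c3]].
  assert (he := psi_edge_lt_half q hq).
  repeat split; intros cmp.
  - apply Lc_le_Rabs; [rewrite Rabs_pos_eq |]; lra.
  - apply Lc_le_Rabs; [apply c2 |]; lra.
  - apply Lc_lt_Rabs; [apply c3 |]; lra.
Qed.

Let tbar := sqrt qbar.

Lemma tbar_pos : 0 < tbar.
Proof. apply sqrt_lt_R0, qbar_pos. Qed.

Lemma tbar_sq : tbar * tbar = qbar.
Proof. apply sqrt_sqrt. generalize qbar_pos. lra. Qed.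

Lemma T_sqrt_increasing t1 t2 : 0 < t1 -> t1 < t2 -> t2 <= tbar -> T_sqrt b d t1 <= T_sqrt b d t2.
Proof.
  intros h1 h12 h2.
  apply (le_of_quadratic_increments _ (b / t1));
    [apply Rlt_le, Rdiv_lt_0_compat; lra | exact h12 |].
  intros a c ha hac hc.
  assert (S := T_sqrt_sub_le b d hb hd a c ltac:(lra) ltac:(lra)).
  assert (hcq : c * c <= qbar) by (rewrite <- tbar_sq; nra).
  assert (D := proj1 (proj2 (Lc_psi_edge_cmp (c * c) ltac:(nra))) hcq).
  assert (hac' : 1 / c < 1 / a) by (unfold Rdiv; rewrite !Rmult_1_l; apply Rinv_lt_contravar; nra).
  assert ((Lc b (psi_edge b d (c * c)) + ln (Gamma b)) * (1 / a - 1 / c) <= 0)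
    by (apply Rmult_le_0_r; lra).
  assert (b * (c - a) * (c - a) / a <= b / t1 * (c - a) * (c - a)).
  { replace (b * (c - a) * (c - a) / a) with (b * ((c - a) * (c - a)) * / a) by (field; lra).
    replace (b / t1 * (c - a) * (c - a)) with (b * ((c - a) * (c - a)) * / t1) by (field; lra).
    apply Rmult_le_compat_l; [apply Rmult_le_pos; [lra | apply Rle_0_sqr]|].
    destruct ha as [lt|<-]; [left; apply Rinv_lt_contravar; nra | lra]. }
  lra.
Qed.

Lemma T_sqrt_decreasing t1 t2 : tbar <= t1 -> t1 < t2 -> T_sqrt b d t2 <= T_sqrt b d t1.
Proof.
  intros h1 h12. assert (htb := tbar_pos).
  apply (ge_of_quadratic_increments _ (b / tbar));
    [apply Rlt_le, Rdiv_lt_0_compat; lra | exact h12 |].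
  intros a c ha hac hc.
  assert (S := T_sqrt_sub_le b d hb hd c a ltac:(lra) ltac:(lra)).
  assert (haq : qbar <= a * a) by (rewrite <- tbar_sq; nra).
  assert (D := proj1 (Lc_psi_edge_cmp (a * a) ltac:(nra)) haq).
  assert (hac' : 1 / c < 1 / a) by (unfold Rdiv; rewrite !Rmult_1_l; apply Rinv_lt_contravar; nra).
  assert ((Lc b (psi_edge b d (a * a)) + ln (Gamma b)) * (1 / c - 1 / a) <= 0)
    by (apply Rmult_le_0_l; lra).
  assert (b * (a - c) * (a - c) / c <= b / tbar * (c - a) * (c - a)).
  { replace (b * (a - c) * (a - c) / c) with (b * ((c - a) * (c - a)) * / c) by (field; lra).
    replace (b / tbar * (c - a) * (c - a)) with (b * ((c - a) * (c - a)) * / tbar) by (field; lra).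
    apply Rmult_le_compat_l; [apply Rmult_le_pos; [lra | apply Rle_0_sqr]|].
    left; apply Rinv_lt_contravar; nra. }
  lra.
Qed.

Lemma T_sqrt_le_tbar t : 0 < t -> T_sqrt b d t <= T_sqrt b d tbar.
Proof.
  intros ht. destruct (Rtotal_order t tbar) as [c|[->|c]].
  - apply T_sqrt_increasing; lra.
  - lra.
  - apply T_sqrt_decreasing; lra.
Qed.

(* For [a] close to [c] the negative linear term of [T_sqrt_sub_le] beats the quadratic one. *)
Lemma T_sqrt_lt_near c t : 0 < t < c -> c * c < qbar ->
  exists a, t <= a < c /\ T_sqrt b d a < T_sqrt b d c.
Proof.
  intros ht hcq.
  assert (Dn := proj2 (proj2 (Lc_psi_edge_cmp (c * c) ltac:(nra))) hcq).
  set (Dc := Lc b (psi_edge b d (c * c)) - Lc b x) in *.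
  set (eta := Rmin ((c - t) / 2) (- Dc / (2 * b * c))).
  assert (he0 : 0 < eta).
  { apply Rmin_glb_lt; [lra|]. apply Rdiv_lt_0_compat; [unfold Dc; lra | nra]. }
  assert (he1 : eta <= (c - t) / 2) by apply Rmin_l.
  assert (he2 : eta <= - Dc / (2 * b * c)) by apply Rmin_r.
  exists (c - eta). split; [lra|].
  assert (S := T_sqrt_sub_le b d hb hd (c - eta) c ltac:(lra) ltac:(lra)).
  replace (Lc b (psi_edge b d (c * c)) + ln (Gamma b)) with Dc in S by (unfold Dc; lra).
  replace (Dc * (1 / (c - eta) - 1 / c) + b * (c - (c - eta)) * (c - (c - eta)) / (c - eta))
    with (eta / (c - eta) * (Dc / c + b * eta)) in S by (field; lra).
  assert (b * eta <= - Dc / (2 * c)).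
  { replace (- Dc / (2 * c)) with (b * (- Dc / (2 * b * c))) by (field; lra).
    apply Rmult_le_compat_l; lra. }
  assert (Dc / c < 0) by (apply Rdiv_neg_pos; unfold Dc; lra).
  assert (0 < eta / (c - eta)) by (apply Rdiv_lt_0_compat; lra).
  assert (eta / (c - eta) * (Dc / c + b * eta) < 0).
  { apply Rmult_pos_neg; [assumption|].
    replace (- Dc / (2 * c)) with (Dc / c / -2) in * by (field; lra). lra. }
  lra.
Qed.

Lemma Tq_T_sqrt q : 0 < q -> Tq b d q = T_sqrt b d (sqrt q).
Proof. intros hq. unfold T_sqrt. rewrite sqrt_sqrt; [reflexivity | lra]. Qed.

Lemma qbar_is_maximizer : is_maximizer b d qbar.
Proof.
  split; [apply qbar_pos|]. intros q hq.
  rewrite (Tq_T_sqrt q hq), (Tq_T_sqrt qbar qbar_pos).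
  apply T_sqrt_le_tbar, sqrt_lt_R0, hq.
Qed.

Lemma maximizer_ge_qbar q : is_maximizer b d q -> qbar <= q.
Proof.
  intros [hq hmax]. destruct (Rle_lt_dec qbar q) as [ok|lt]; [exact ok|exfalso].
  set (t := sqrt q).
  assert (ht : 0 < t) by apply sqrt_lt_R0, hq.
  assert (htt : t < tbar) by (apply sqrt_lt_1; lra).
  assert (Gt : T_sqrt b d tbar <= T_sqrt b d t).
  { unfold t, tbar. rewrite <- (Tq_T_sqrt q hq), <- (Tq_T_sqrt qbar qbar_pos).
    now apply hmax, qbar_pos. }
  set (c := (t + tbar) / 2).
  destruct (T_sqrt_lt_near c t ltac:(unfold c; lra)) as [a [ha Ta]].
  { rewrite <- tbar_sq. unfold c. nra. }
  assert (T_sqrt b d t <= T_sqrt b d a).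
  { destruct (proj1 ha) as [lt'|<-]; [apply T_sqrt_increasing | right]; unfold c in *; lra. }
  assert (T_sqrt b d c <= T_sqrt b d tbar) by (apply T_sqrt_increasing; unfold c; lra).
  lra.
Qed.

(* At [s = b/2 - d] the segment of [H] ends at [0]; [qstar] lies below [H'] there. *)
Lemma Derive_H_lt_qbar : Derive (H b d) (b / 2 - d) < qbar.
Proof.
  assert (hdom : - d < b / 2 - d < b - d) by lra.
  unfold qbar. destruct (Rle_dec (2 * x) (b - 2 * d)) as [c|c].
  - assert (I := H_identity b d hb hd _ _ hdom (DH _ hdom)).
    replace (b / 2 - d + (d - b / 2)) with 0 in I by ring. rewrite Lc_0 in I.
    assert (hH := H_ge_0 b d hb hd _ hdom).
    assert (hpos := qbar_pos).
    unfold qbar in hpos. destruct (Rle_dec (2 * x) (b - 2 * d)); [|contradiction].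
    assert (hm : 0 < b / 2 - d) by lra.
    destruct (Rle_lt_dec (Derive (H b d) (b / 2 - d)) 0) as [le|gt]; [lra | nra].
  - apply Derive_H_lt_iff; lra.
Qed.

Lemma qstar_lt_qbar : Rbar_lt (qstar b d) (Finite qbar).
Proof.
  set (Hm := Derive (H b d) (b / 2 - d)).
  assert (hHm : Hm < qbar) by apply Derive_H_lt_qbar.
  set (q0 := (Rmax 0 Hm + qbar) / 2).
  assert (Rmax 0 Hm < qbar) by (apply Rmax_lub_lt; [apply qbar_pos | exact hHm]).
  assert (0 <= Rmax 0 Hm /\ Hm <= Rmax 0 Hm) by (split; [apply Rmax_l | apply Rmax_r]).
  assert (hq0 : 0 < q0) by (unfold q0; lra).
  destruct (s_delta_spec b d hb hd q0 hq0) as [s1 s2].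
  assert (b / 2 - d < s_delta b d q0).
  { apply (Derive_H_lt_iff b d hb hd); [lra | exact s1 |].
    rewrite (is_derive_unique _ _ _ s2). unfold q0, Hm in *. lra. }
  destruct (Glb_Rbar_correct (fun q => 0 < q /\ d - b / 2 + s_delta b d q >= 0)) as [lb _].
  apply (Rbar_le_lt_trans _ (Finite q0)); [apply lb; split; lra | simpl; unfold q0; lra].
Qed.

End Maximizer.

Theorem mainTheorem17 (beta delta : R) :
  beta > beta_c ->
  0 < delta < beta ->
  Rbar_le (Finite delta) (deltabar beta) ->
  (exists q, is_maximizer beta delta q) /\
  (forall q, is_maximizer beta delta q -> Rbar_lt (qstar beta delta) (Finite q)).
Proof.
  intros hbc hd hdb.
  assert (hb := beta_c_pos beta hbc).
  destruct (x_beta_spec beta hbc) as [hx hxl].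
  assert (hneg : Derive (H beta delta) (beta / 2 - delta - x_beta beta) <= 0).
  { apply Derive_H_shifted_x_le_0; auto.
    apply (Rbar_le_trans _ _ _ hdb), Rbar_min_r. }
  split.
  - exists (qbar beta delta (x_beta beta)). now apply qbar_is_maximizer.
  - intros q hq.
    apply (Rbar_lt_le_trans _ _ _ (qstar_lt_qbar beta delta (x_beta beta) hb hd hx)).
    exact (maximizer_ge_qbar beta delta (x_beta beta) hb hd hx hxl hneg q hq).
Qed.
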